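(* Let $n,p\in\mathbb{N}$, $0\le\lambda\le1$. Let $f$ be analytic in $\mathrm{U}=\{|z|<1\}$ of the form $f(z)=z^p+\sum_{k=p+n}^\infty a_kz^k$, put $\mathcal{F}_\lambda(z)=(1-\lambda)f(z)+\lambda zf'(z)$, and assume $\mathcal{F}_\lambda(z)\mathcal{F}_\lambda'(z)\neq0$ for all $z\in\mathrm{U}\setminus\{0\}$. Let $M\ge p$. If $$\operatorname{Re}\left[-\frac{z\mathcal{F}_\lambda'(z)}{\mathcal{F}_\lambda(z)}+1+\frac{z\mathcal{F}_\lambda''(z)}{\mathcal{F}_\lambda'(z)}\right]<\frac{nM}{M+p},\quad z\in\mathrm{U},$$ then $$\left|\frac{z\mathcal{F}_\lambda'(z)}{\mathcal{F}_\lambda(z)}-p\right|<M,\quad z\in\mathrm{U}.$$ *)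

From Stdlib Require Import Reals.
From Coquelicot Require Import Coquelicot.
Open Scope C_scope.

Definition inU (z : C) : Prop := (Cmod z < 1)%R.

Definition Cderiv (f : C -> C) (z l : C) : Prop :=
  @is_derive C_AbsRing C_NormedModule f z l.

Definition Cseries (a : nat -> C) (z s : C) : Prop :=
  @is_series C_AbsRing C_NormedModule (fun k => a k * z ^ k) s.

(* F_lambda(z) = (1 - lambda) f(z) + lambda z f'(z), with f' given as f1 *)
Definition Flam (lam : R) (f f1 : C -> C) (z : C) : C :=
  (1 - RtoC lam) * f z + RtoC lam * z * f1 z.

From Stdlib Require Import Reals Lra Lia Psatz ClassicalEpsilon Classical FunctionalExtensionality.
From Coquelicot Require Import Coquelicot.
Open Scope C_scope.

(* Write [F] for [F_lambda]. Its Taylor coefficients are [(1 - lam + lam k) a_k], so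
   [F = z^p H] and [z F' - p F = z^(p+n) J] with [H], [J] holomorphic and [H] zero-free on [U];
   hence [w := z F'/F - p = z^n g] with [g = J / H] holomorphic. If [|w(z)| >= M] with [|z| = rho],
   take [z0] maximizing [|g|], hence [|w|], on [|z| = rho]. Jack's lemma makes [z0 g'(z0)/g(z0)] a
   real [c >= 0], so [z0 w'(z0)/w(z0) = n + c =: k >= n]. Now [1 + z F''/F' - z F'/F] is the
   logarithmic derivative [z phi'/phi] of [phi = z F'/F = p + w], equal to [k w/(p + w)] at [z0],
   whose real part is at least [n M/(M + p)] as [|w| >= M >= p]: a contradiction. *)

(** * Complex differentiability in epsilon-delta form *)

Definition Cdiff (h : C -> C) (z l : C) : Prop :=
  forall eps : R, (0 < eps)%R -> exists del : R, (0 < del)%R /\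
    forall y, (Cmod (y - z) < del)%R ->
      (Cmod (h y - h z - l * (y - z)) <= eps * Cmod (y - z))%R.

(* Coquelicot differentiates [C -> C] either with the codomain [C_NormedModule] (as in [Cderiv])
   or with [AbsRing_NormedModule C_AbsRing] (as in its product rule); the two carry different
   uniform structures, so each conversion below is proved for both. *)
Local Ltac is_derive_to_Cdiff :=
  let Hd := fresh in let e := fresh in let Hb := fresh in
  intros [_ Hd] eps Heps;
  destruct (Hd _ (fun P H => H) (mkposreal eps Heps)) as [[e ?] Hb]; simpl in Hb;
  exists e; split; [lra|];
  intros y Hy; specialize (Hb y);
  unfold ball in Hb; simpl in Hb; unfold AbsRing_ball, abs, minus, plus, opp in Hb; simpl in Hb;
  match type of Hb with context [y + - ?Z] => replace (y + - Z) with (y - Z) in Hb by ring end;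
  specialize (Hb Hy);
  unfold minus, plus, opp, scal, norm in Hb; simpl in Hb; unfold abs, mult in Hb; simpl in Hb;
  match goal with |- (Cmod (?A - ?B - ?L * ?D) <= _)%R =>
    replace (A - B - L * D) with (A + - B + - (D * L)) by ring end; exact Hb.

Local Ltac Cdiff_to_is_derive :=
  let H := fresh in let x := fresh in let Hx := fresh in
  intros H; split; [apply is_linear_scal_l|];
  intros x Hx;
  apply (@is_filter_lim_locally_unique C_AbsRing (AbsRing_NormedModule C_AbsRing)) in Hx; subst x;
  intros [eps Heps]; destruct (H eps Heps) as [d [Hd Hb]];
  exists (mkposreal d Hd); intros y Hy; simpl in Hy;
  unfold ball in Hy; simpl in Hy; unfold AbsRing_ball, abs, minus, plus, opp in Hy; simpl in Hy;
  match type of Hy with context [y + - ?Z] => replace (y + - Z) with (y - Z) in Hy by ring end;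
  specialize (Hb y Hy);
  unfold minus, plus, opp, scal, norm; simpl; unfold abs, mult; simpl;
  match goal with |- (Cmod (?A + - ?B + - ((?Y + - ?Z) * ?L)) <= _)%R =>
    replace (A + - B + - ((Y + - Z) * L)) with (A - B - L * (Y - Z)) by ring;
    replace (Y + - Z) with (Y - Z) by ring end; exact Hb.

Lemma Cderiv_Cdiff h z l : Cderiv h z l -> Cdiff h z l.
Proof. is_derive_to_Cdiff. Qed.

Lemma Cdiff_Cderiv h z l : Cdiff h z l -> Cderiv h z l.
Proof. Cdiff_to_is_derive. Qed.

Lemma is_derive_Cdiff h z l :
  @is_derive C_AbsRing (AbsRing_NormedModule C_AbsRing) h z l -> Cdiff h z l.
Proof. is_derive_to_Cdiff. Qed.

Lemma Cdiff_is_derive h z l :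
  Cdiff h z l -> @is_derive C_AbsRing (AbsRing_NormedModule C_AbsRing) h z l.
Proof. Cdiff_to_is_derive. Qed.

Lemma Cmod_triangle_rev (a b : C) : (Cmod a - Cmod b <= Cmod (a - b))%R.
Proof.
  pose proof (Cmod_triangle (a - b) b) as H. replace (a - b + b) with a in H by ring. lra.
Qed.

Lemma Cdiff_continuous h z l : Cdiff h z l -> forall eps, (0 < eps)%R ->
  exists del, (0 < del)%R /\ forall y, (Cmod (y - z) < del)%R -> (Cmod (h y - h z) < eps)%R.
Proof.
  intros H eps Heps. destruct (H 1%R ltac:(lra)) as [d [Hd Hb]].
  pose proof (Cmod_ge_0 l).
  exists (Rmin d (eps / (2 * (1 + Cmod l))))%R. split.
  { apply Rmin_pos; auto. apply Rdiv_lt_0_compat; lra. }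
  intros y Hy.
  assert (Hy1 : (Cmod (y - z) < d)%R) by (eapply Rlt_le_trans; [exact Hy| apply Rmin_l]).
  assert (Hy2 : (Cmod (y - z) * (2 * (1 + Cmod l)) < eps)%R).
  { apply (Rlt_le_trans _ _ _ (Rmult_lt_compat_r (2 * (1 + Cmod l)) _ _ ltac:(lra) Hy)).
    apply (Rle_trans _ (eps / (2 * (1 + Cmod l)) * (2 * (1 + Cmod l)))).
    - apply Rmult_le_compat_r; [lra|apply Rmin_r].
    - right; field; lra. }
  specialize (Hb y Hy1).
  replace (h y - h z) with ((h y - h z - l * (y - z)) + l * (y - z)) by ring.
  eapply Rle_lt_trans. apply Cmod_triangle. rewrite Cmod_mult.
  pose proof (Cmod_ge_0 (y - z)). nra.
Qed.

Lemma Cdiff_unique h z l1 l2 : Cdiff h z l1 -> Cdiff h z l2 -> l1 = l2.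
Proof.
  intros H1 H2. destruct (Ceq_dec l1 l2) as [E|E]; auto. exfalso.
  assert (Hp : (0 < Cmod (l1 - l2))%R).
  { apply Cmod_gt_0. intro E2. apply E. apply (proj2 (Ceq_minus l1 l2)). auto. }
  set (e := (Cmod (l1 - l2) / 4)%R).
  destruct (H1 e ltac:(unfold e; lra)) as [d1 [Hd1 B1]].
  destruct (H2 e ltac:(unfold e; lra)) as [d2 [Hd2 B2]].
  set (s := (Rmin d1 d2 / 2)%R).
  pose proof (Rmin_l d1 d2). pose proof (Rmin_r d1 d2). pose proof (Rmin_pos d1 d2 Hd1 Hd2).
  set (y := z + RtoC s).
  assert (Hy : Cmod (y - z) = s).
  { unfold y. replace (z + s - z) with (RtoC s) by ring. rewrite Cmod_R. apply Rabs_right. unfold s. lra. }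
  specialize (B1 y ltac:(unfold s in *; lra)). specialize (B2 y ltac:(unfold s in *; lra)).
  rewrite Hy in B1, B2.
  assert (Hdiff : (Cmod ((l1 - l2) * (y - z)) <= 2 * e * s)%R).
  { replace ((l1 - l2) * (y - z)) with ((h y - h z - l2 * (y - z)) - (h y - h z - l1 * (y - z))) by ring.
    eapply Rle_trans. unfold Cminus at 1. apply Cmod_triangle. rewrite Cmod_opp. lra. }
  rewrite Cmod_mult, Hy in Hdiff. unfold e, s in *. nra.
Qed.

Lemma Cdiff_ext_loc h1 h2 z l :
  (exists del, (0 < del)%R /\ forall y, (Cmod (y - z) < del)%R -> h1 y = h2 y) ->
  Cdiff h1 z l -> Cdiff h2 z l.
Proof.
  intros [d [Hd He]] H eps Heps. destruct (H eps Heps) as [d1 [Hd1 B]].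
  exists (Rmin d d1). split. apply Rmin_pos; auto.
  intros y Hy. rewrite <- !He.
  - apply B. eapply Rlt_le_trans; [exact Hy|apply Rmin_r].
  - replace (z - z) with (RtoC 0) by ring. rewrite Cmod_0. auto.
  - eapply Rlt_le_trans; [exact Hy|apply Rmin_l].
Qed.

Lemma Cdiff_ext h1 h2 z l : (forall y, h1 y = h2 y) -> Cdiff h1 z l -> Cdiff h2 z l.
Proof.
  intros E. apply Cdiff_ext_loc. exists 1%R. split; [lra|]. intros y _. apply E.
Qed.

Lemma Cdiff_plus f g z a b : Cdiff f z a -> Cdiff g z b -> Cdiff (fun x => f x + g x) z (a + b).
Proof.
  intros Hf Hg. apply Cderiv_Cdiff. apply Cdiff_Cderiv in Hf, Hg.
  exact (@is_derive_plus C_AbsRing C_NormedModule f g z a b Hf Hg).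
Qed.

Lemma Cdiff_mult f g z a b :
  Cdiff f z a -> Cdiff g z b -> Cdiff (fun x => f x * g x) z (a * g z + f z * b).
Proof.
  intros Hf Hg. apply is_derive_Cdiff. apply Cdiff_is_derive in Hf, Hg.
  exact (@is_derive_mult C_AbsRing f g z a b Hf Hg Cmult_comm).
Qed.

Lemma Cdiff_const c z : Cdiff (fun _ => c) z 0.
Proof. apply Cderiv_Cdiff. exact (@is_derive_const C_AbsRing C_NormedModule c z). Qed.

Lemma Cdiff_id z : Cdiff (fun x => x) z 1.
Proof. apply is_derive_Cdiff. exact (@is_derive_id C_AbsRing z). Qed.

Lemma Cdiff_comp f g z a b : Cdiff g z a -> Cdiff f (g z) b -> Cdiff (fun x => f (g x)) z (a * b).
Proof.
  intros Hg Hf. apply Cderiv_Cdiff. apply Cdiff_Cderiv in Hf. apply Cdiff_is_derive in Hg.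
  exact (@is_derive_comp C_AbsRing C_NormedModule f g z b a Hf Hg).
Qed.

Lemma Cdiff_scal c f z a : Cdiff f z a -> Cdiff (fun x => c * f x) z (c * a).
Proof.
  intros H. replace (c * a) with (0 * f z + c * a) by ring.
  exact (Cdiff_mult (fun _ => c) f z 0 a (Cdiff_const c z) H).
Qed.

Lemma Cdiff_minus f g z a b : Cdiff f z a -> Cdiff g z b -> Cdiff (fun x => f x - g x) z (a - b).
Proof.
  intros Hf Hg. apply Cdiff_plus; auto.
  replace (- b) with (-1 * b) by ring.
  apply (Cdiff_ext (fun x => -1 * g x)); [intros; ring|]. apply Cdiff_scal; auto.
Qed.

Lemma Cmult_INR_pow_pred (n : nat) (z : C) : z * (RtoC (INR n) * z ^ pred n) = RtoC (INR n) * z ^ n.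
Proof. destruct n; simpl; ring. Qed.

Lemma Cdiff_pow (n : nat) z : Cdiff (fun x => x ^ n) z (RtoC (INR n) * z ^ pred n).
Proof.
  induction n as [|n IH].
  - replace (RtoC (INR 0) * z ^ pred 0) with (RtoC 0) by (simpl; ring). exact (Cdiff_const 1 z).
  - replace (RtoC (INR (S n)) * z ^ pred (S n)) with (1 * z ^ n + z * (RtoC (INR n) * z ^ pred n)).
    + apply (Cdiff_ext (fun x => x * x ^ n)); [reflexivity|].
      exact (Cdiff_mult _ _ z _ _ (Cdiff_id z) IH).
    + rewrite Cmult_INR_pow_pred, S_INR, RtoC_plus. simpl. ring.
Qed.

Lemma Cdiff_Cinv (w : C) : w <> 0 -> Cdiff Cinv w (- / (w * w)).
Proof.
  intros Hw eps Heps.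
  assert (Hm : (0 < Cmod w)%R) by exact (proj1 (Cmod_gt_0 w) Hw).
  exists (Rmin (Cmod w / 2) (eps * (Cmod w * Cmod w * Cmod w) / 2))%R. split.
  { apply Rmin_pos. lra. apply Rdiv_lt_0_compat; [|lra]. repeat apply Rmult_lt_0_compat; auto. }
  intros y Hy.
  assert (Hy1 : (Cmod (y - w) < Cmod w / 2)%R) by (eapply Rlt_le_trans; [exact Hy|apply Rmin_l]).
  assert (Hy2 : (Cmod (y - w) < eps * (Cmod w * Cmod w * Cmod w) / 2)%R)
    by (eapply Rlt_le_trans; [exact Hy|apply Rmin_r]).
  assert (Hyl : (Cmod w / 2 <= Cmod y)%R).
  { pose proof (Cmod_triangle_rev w (w - y)) as H. replace (w - (w - y)) with y in H by ring.
    replace (w - y) with (- (y - w)) in H by ring. rewrite Cmod_opp in H. lra. }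
  assert (Hy0 : y <> 0). { intro E. subst y. rewrite Cmod_0 in Hyl. lra. }
  replace (/ y - / w - - / (w * w) * (y - w)) with ((y - w) * (y - w) / (y * (w * w))) by (field; auto).
  rewrite Cmod_div by (repeat apply Cmult_neq_0; auto).
  rewrite !Cmod_mult.
  pose proof (Cmod_ge_0 (y - w)).
  apply Rle_trans with (Cmod (y - w) * Cmod (y - w) / (Cmod w / 2 * (Cmod w * Cmod w)))%R.
  { unfold Rdiv. apply Rmult_le_compat_l. nra. apply Rinv_le_contravar.
    apply Rmult_lt_0_compat. lra. nra. apply Rmult_le_compat_r. nra. auto. }
  apply (Rmult_le_reg_r (Cmod w / 2 * (Cmod w * Cmod w))). apply Rmult_lt_0_compat. lra. nra.
  unfold Rdiv at 1. rewrite Rmult_assoc, Rinv_l. 2:{ apply Rgt_not_eq. apply Rmult_lt_0_compat. lra. nra. }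
  nra.
Qed.

Lemma Cdiv_neq_0 (a b : C) : a <> 0 -> b <> 0 -> a / b <> 0.
Proof.
  intros Ha Hb E. apply Ha. replace a with (a / b * b) by (field; auto). rewrite E. ring.
Qed.

Lemma Cdiff_div f g z a b : Cdiff f z a -> Cdiff g z b -> g z <> 0 ->
  Cdiff (fun x => f x / g x) z ((a * g z - f z * b) / (g z * g z)).
Proof.
  intros Hf Hg Hz.
  pose proof (Cdiff_comp Cinv g z b _ Hg (Cdiff_Cinv _ Hz)) as Hinv.
  replace ((a * g z - f z * b) / (g z * g z)) with (a * / g z + f z * (b * - / (g z * g z)))
    by (field; auto).
  exact (Cdiff_mult f (fun x => / g x) z a _ Hf Hinv).
Qed.

Definition Cdiff2_on_U (g g1 g2 : C -> C) : Prop :=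
  forall z, inU z -> Cdiff g z (g1 z) /\ Cdiff g1 z (g2 z).

Lemma inU_ball (z : C) : inU z -> forall y, (Cmod (y - z) < 1 - Cmod z)%R -> inU y.
Proof.
  intros Hz y Hy. unfold inU in *. replace y with ((y - z) + z) by ring.
  eapply Rle_lt_trans. apply Cmod_triangle. lra.
Qed.

Lemma Cdiff2_on_U_div (f f1 f2 h h1 h2 : C -> C) :
  Cdiff2_on_U f f1 f2 -> Cdiff2_on_U h h1 h2 -> (forall w, inU w -> h w <> 0) ->
  exists q1 q2, Cdiff2_on_U (fun w => f w / h w) q1 q2.
Proof.
  intros Hf Hh Hh0.
  set (q1 := fun w => (f1 w * h w - f w * h1 w) / (h w * h w)).
  assert (Hq1 : forall w, inU w -> exists l, Cdiff q1 w l).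
  { intros w Hw. destruct (Hf w Hw) as [Df Df1]. destruct (Hh w Hw) as [Dh Dh1].
    eexists. apply Cdiff_div.
    - apply Cdiff_minus; apply Cdiff_mult; eauto.
    - apply Cdiff_mult; eauto.
    - apply Cmult_neq_0; apply Hh0; auto. }
  exists q1, (fun w => epsilon (inhabits (RtoC 0)) (Cdiff q1 w)).
  intros w Hw. split.
  - destruct (Hf w Hw), (Hh w Hw). apply Cdiff_div; auto.
  - apply epsilon_spec, Hq1, Hw.
Qed.


(** * Power series *)

Local Notation is_Cseries a s := (@is_series C_AbsRing C_NormedModule a s).

Lemma is_Cseries_ext (a b : nat -> C) (la lb : C) :
  (forall n, a n = b n) -> la = lb -> is_Cseries a la -> is_Cseries b lb.
Proof. intros H E Ha. subst lb. exact (is_series_ext a b la H Ha). Qed.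

Lemma is_Cseries_scal (c : C) (a : nat -> C) (l : C) :
  is_Cseries a l -> is_Cseries (fun n => c * a n) (c * l).
Proof. exact (@is_series_scal C_AbsRing C_NormedModule c a l). Qed.

Lemma is_Cseries_plus (a b : nat -> C) (la lb : C) :
  is_Cseries a la -> is_Cseries b lb -> is_Cseries (fun n => a n + b n) (la + lb).
Proof. exact (@is_series_plus C_AbsRing C_NormedModule a b la lb). Qed.

Lemma is_Cseries_minus (a b : nat -> C) (la lb : C) :
  is_Cseries a la -> is_Cseries b lb -> is_Cseries (fun n => a n - b n) (la - lb).
Proof. exact (@is_series_minus C_AbsRing C_NormedModule a b la lb). Qed.

Lemma is_Cseries_decr_1 (a : nat -> C) (l : C) :
  a 0%nat = 0 -> is_Cseries (fun k => a (S k)) l -> is_Cseries a l.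
Proof.
  intros H0 H. apply is_series_decr_1.
  match goal with |- is_series _ ?L => replace L with l end. exact H.
  unfold plus, opp; simpl. rewrite H0. ring.
Qed.

Lemma is_Cseries_incr_1 (a : nat -> C) (l : C) :
  is_Cseries a l -> is_Cseries (fun k => a (S k)) (l - a 0%nat).
Proof.
  intros H. apply (@is_series_incr_1 C_AbsRing C_NormedModule a (l - a 0%nat)).
  match goal with |- is_series _ ?L => replace L with l end. exact H.
  unfold plus; simpl. ring.
Qed.

Lemma is_Cseries_Cmod_le (a : nat -> C) (s : C) (c : nat -> R) (S : R) :
  is_Cseries a s -> (forall k, (Cmod (a k) <= c k)%R) -> is_series c S -> (Cmod s <= S)%R.
Proof.
  intros Ha Hb Hc.
  assert (Hn : filterlim (fun N => @norm C_AbsRing C_NormedModule (sum_n a N)) eventually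
                 (locally (@norm C_AbsRing C_NormedModule s))).
  { eapply filterlim_comp. exact Ha. apply filterlim_norm. }
  change (Cmod s) with (@norm C_AbsRing C_NormedModule s).
  assert (H := filterlim_le (F := eventually) (fun N => @norm C_AbsRing C_NormedModule (sum_n a N))
                (sum_n c) (@norm C_AbsRing C_NormedModule s) S).
  simpl in H. apply H; auto.
  exists 0%nat. intros N _. unfold sum_n.
  eapply Rle_trans. apply (@norm_sum_n_m C_AbsRing C_NormedModule a 0 N).
  apply sum_n_m_le. intros k. apply Hb.
Qed.

Lemma is_Cseries_terms_bounded (a : nat -> C) (s : C) :
  is_Cseries a s -> exists B, (0 <= B)%R /\ forall k, (Cmod (a k) <= B)%R.
Proof.
  intros Ha.
  assert (Hc : Cauchy_series a)
    by (apply (@Cauchy_ex_series C_AbsRing C_CompleteNormedModule); exists s; exact Ha).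
  destruct (Hc (mkposreal 1 Rlt_0_1)) as [N HN].
  assert (Hfin : forall n, exists B, (0 <= B)%R /\ forall k, (k <= n)%nat -> (Cmod (a k) <= B)%R).
  { induction n as [|n [B [HB0 HB]]].
    - exists (Cmod (a 0%nat)). split. apply Cmod_ge_0. intros k Hk. replace k with 0%nat by lia. lra.
    - exists (Rmax B (Cmod (a (S n)))). split.
      + eapply Rle_trans; [exact HB0|apply Rmax_l].
      + intros k Hk. destruct (Nat.eq_dec k (S n)) as [->|Hne]. apply Rmax_r.
        eapply Rle_trans; [apply HB; lia|apply Rmax_l]. }
  destruct (Hfin N) as [B [HB0 HB]].
  exists (Rmax B 1). split. eapply Rle_trans; [exact HB0|apply Rmax_l].
  intros k. destruct (Compare_dec.le_lt_dec k N) as [Hk|Hk].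
  - eapply Rle_trans; [apply HB; auto|apply Rmax_l].
  - specialize (HN k k ltac:(lia) ltac:(lia)). rewrite sum_n_n in HN. change (Cmod (a k) < 1)%R in HN.
    eapply Rle_trans; [|apply Rmax_r]. lra.
Qed.

Lemma is_series_sqr_mult_pow (q : R) : (0 < q < 1)%R ->
  exists S, (0 <= S)%R /\ is_series (fun k => ((INR k + 1) * (INR k + 1) * q ^ k)%R) S.
Proof.
  intros Hq.
  assert (Hpos : forall k, (0 <= (INR k + 1) * (INR k + 1) * q ^ k)%R).
  { intros k. pose proof (pos_INR k). pose proof (pow_lt q k ltac:(lra)). nra. }
  assert (Hi : is_lim_seq (fun n => / (INR n + 1))%R 0).
  { replace (Finite 0) with (Rbar_inv p_infty) by reflexivity.
    apply is_lim_seq_inv. eapply is_lim_seq_plus. apply is_lim_seq_INR. apply is_lim_seq_const.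
    reflexivity. discriminate. }
  assert (Hex : ex_series (fun k => Rabs ((INR k + 1) * (INR k + 1) * q ^ k))).
  { apply (ex_series_DAlembert _ q). lra.
    - intros n. pose proof (pos_INR n). pose proof (pow_lt q n ltac:(lra)). nra.
    - apply is_lim_seq_ext with (fun n => ((1 + / (INR n + 1)) * (1 + / (INR n + 1)) * q)%R).
      + intros n. pose proof (pos_INR n). pose proof (pow_lt q n ltac:(lra)).
        symmetry. rewrite Rabs_right.
        * rewrite S_INR. simpl. field. lra.
        * apply Rle_ge. unfold Rdiv. apply Rmult_le_pos; [apply Hpos|].
          left. apply Rinv_0_lt_compat. nra.
      + replace (Finite q) with (Finite (((1 + 0) * (1 + 0)) * q)%R) by (f_equal; ring).
        repeat apply is_lim_seq_mult'; try apply is_lim_seq_plus'; auto using is_lim_seq_const. }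
  destruct Hex as [S HS]. exists S. split.
  - assert (H := filterlim_le (F := eventually) (fun _ => 0%R)
             (sum_n (fun k => Rabs ((INR k + 1) * (INR k + 1) * q ^ k))) 0%R S).
    simpl in H. apply H.
    + exists 0%nat. intros N _. rewrite sum_n_Reals. apply cond_pos_sum. intros k. apply Rabs_pos.
    + apply filterlim_const.
    + exact HS.
  - eapply is_series_ext; [|exact HS]. intros n. apply Rabs_right, Rle_ge, Hpos.
Qed.

Definition Csum (b : nat -> C) (z : C) : C := epsilon (inhabits (RtoC 0)) (Cseries b z).

Definition converges_on_U (b : nat -> C) : Prop := forall z, inU z -> exists s, Cseries b z s.

Definition coef_deriv (b : nat -> C) (k : nat) : C := RtoC (INR (S k)) * b (S k).

Lemma Cseries_unique b z s1 s2 : Cseries b z s1 -> Cseries b z s2 -> s1 = s2.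
Proof.
  exact (@filterlim_locally_unique nat C_AbsRing C_NormedModule eventually _ _ s1 s2).
Qed.

Lemma Csum_correct b z : (exists s, Cseries b z s) -> Cseries b z (Csum b z).
Proof. intros H. unfold Csum. apply epsilon_spec. exact H. Qed.

Lemma Csum_eq b z s : Cseries b z s -> Csum b z = s.
Proof.
  intros H. apply (Cseries_unique b z); [apply Csum_correct; exists s|]; exact H.
Qed.

Lemma Cmod_RtoC_pos (r : R) : (0 <= r)%R -> Cmod (RtoC r) = r.
Proof. intros H. rewrite Cmod_R. apply Rabs_right. lra. Qed.

(* Bound the terms of the series at radius [(1 + r) / 2]. *)
Lemma coef_geometric_decay (b : nat -> C) : converges_on_U b -> forall r, (0 <= r < 1)%R ->
  exists r' q B, (r < r' < 1 /\ 0 < q < 1 /\ 0 <= B)%R /\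
    forall k, (Cmod (b k) * r' ^ k <= B * q ^ k)%R.
Proof.
  intros Hb r Hr.
  set (rho := ((1 + r) / 2)%R). set (r' := ((r + rho) / 2)%R).
  assert (HrhoU : inU (RtoC rho)) by (unfold inU; rewrite Cmod_RtoC_pos; unfold rho; lra).
  destruct (Hb _ HrhoU) as [s Hs].
  destruct (is_Cseries_terms_bounded _ _ Hs) as [B [HB0 HB]].
  exists r', (r' / rho)%R, B. split.
  { unfold r', rho. repeat split; try lra.
    - apply Rdiv_lt_0_compat; lra.
    - apply Rmult_lt_reg_r with ((1 + r) / 2)%R; [lra|]. field_simplify; lra. }
  intros k. specialize (HB k). rewrite Cmod_mult, Cmod_pow, Cmod_RtoC_pos in HB by (unfold rho; lra).
  replace (r' ^ k)%R with ((r' / rho) ^ k * rho ^ k)%R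
    by (rewrite <- Rpow_mult_distr; f_equal; field; unfold rho; lra).
  pose proof (pow_le (r' / rho) k ltac:(apply Rdiv_le_0_compat; unfold r', rho; lra)).
  pose proof (Cmod_ge_0 (b k)). nra.
Qed.

Lemma coef_deriv_converges (b : nat -> C) : converges_on_U b -> converges_on_U (coef_deriv b).
Proof.
  intros Hb z Hz.
  destruct (coef_geometric_decay b Hb (Cmod z) ltac:(split; [apply Cmod_ge_0|exact Hz]))
    as [r' [q [B [[Hr' [Hq HB0]] HB]]]].
  pose proof (Cmod_ge_0 z).
  destruct (is_series_sqr_mult_pow q Hq) as [Sq [_ HSq]].
  destruct (@ex_series_le C_AbsRing C_CompleteNormedModule (fun k => coef_deriv b k * z ^ k)
              (fun k => (B / r' * ((INR k + 1) * (INR k + 1) * q ^ k))%R)) as [s Hs].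
  2:{ exists (B / r' * Sq)%R. apply (is_series_scal (K := R_AbsRing) (V := R_NormedModule)). exact HSq. }
  2:{ exists s. exact Hs. }
  intros k. change (norm (coef_deriv b k * z ^ k)) with (Cmod (coef_deriv b k * z ^ k)).
  unfold coef_deriv. rewrite !Cmod_mult, Cmod_pow, Cmod_RtoC_pos, S_INR by apply pos_INR.
  specialize (HB (S k)). simpl in HB.
  pose proof (pos_INR k). pose proof (Cmod_ge_0 (b (S k))).
  assert (Hzk : (Cmod z ^ k <= r' ^ k)%R) by (apply pow_incr; lra).
  pose proof (pow_le q k ltac:(lra)). pose proof (pow_le r' k ltac:(lra)).
  apply Rle_trans with ((INR k + 1) * (Cmod (b (S k)) * r' ^ k))%R.
  { rewrite <- Rmult_assoc. apply Rmult_le_compat_l; nra. }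
  apply (Rmult_le_reg_l r'); [lra|].
  replace (r' * (B / r' * ((INR k + 1) * (INR k + 1) * q ^ k)))%R
    with ((INR k + 1) * (INR k + 1) * (B * q ^ k))%R by (field; lra).
  assert (HBq : (0 <= B * q ^ k)%R) by (apply Rmult_le_pos; lra).
  assert (Hstep : (r' * (Cmod (b (S k)) * r' ^ k) <= B * q ^ k)%R).
  { replace (r' * (Cmod (b (S k)) * r' ^ k))%R with (Cmod (b (S k)) * (r' * r' ^ k))%R by ring.
    eapply Rle_trans; [exact HB|]. nra. }
  replace (r' * ((INR k + 1) * (Cmod (b (S k)) * r' ^ k)))%R
    with ((INR k + 1) * (r' * (Cmod (b (S k)) * r' ^ k)))%R by ring.
  nra.
Qed.

(* Multiplied by [r ^ 2] to avoid the exponent [k - 2]. *)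
Lemma Cpow_remainder_bound (y z : C) (r : R) (k : nat) :
  (0 <= r)%R -> (Cmod y <= r)%R -> (Cmod z <= r)%R ->
  (r ^ 2 * Cmod (y ^ k - z ^ k - RtoC (INR k) * z ^ pred k * (y - z))
     <= INR k * INR k * r ^ k * Cmod (y - z) ^ 2)%R.
Proof.
  intros Hr Hy Hz.
  set (h := Cmod (y - z)). assert (Hh : (0 <= h)%R) by apply Cmod_ge_0.
  destruct k as [|m].
  { replace (y ^ 0 - z ^ 0 - RtoC (INR 0) * z ^ pred 0 * (y - z)) with (RtoC 0) by (simpl; ring).
    rewrite Cmod_0. simpl. lra. }
  induction m as [|m IH].
  { replace (y ^ 1 - z ^ 1 - RtoC (INR 1) * z ^ pred 1 * (y - z)) with (RtoC 0) by (simpl; ring).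
    rewrite Cmod_0. simpl. nra. }
  replace (y ^ S (S m) - z ^ S (S m) - RtoC (INR (S (S m))) * z ^ pred (S (S m)) * (y - z))
    with (RtoC (INR (S m)) * z ^ m * ((y - z) * (y - z))
          + y * (y ^ S m - z ^ S m - RtoC (INR (S m)) * z ^ pred (S m) * (y - z)))
    by (rewrite (S_INR (S m)), RtoC_plus; simpl; ring).
  set (E := Cmod (y ^ S m - z ^ S m - RtoC (INR (S m)) * z ^ pred (S m) * (y - z))) in *.
  pose proof (Cmod_triangle (RtoC (INR (S m)) * z ^ m * ((y - z) * (y - z)))
                (y * (y ^ S m - z ^ S m - RtoC (INR (S m)) * z ^ pred (S m) * (y - z)))) as Htri.
  rewrite !Cmod_mult, Cmod_pow, Cmod_RtoC_pos in Htri by apply pos_INR. fold h E in Htri.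
  assert (Hzm : (Cmod z ^ m <= r ^ m)%R) by (apply pow_incr; split; [apply Cmod_ge_0|exact Hz]).
  assert (HE : (0 <= E)%R) by apply Cmod_ge_0.
  pose proof (pos_INR (S m)). pose proof (pow_le r m Hr). pose proof (Cmod_ge_0 y).
  pose proof (pow_le (Cmod z) m ltac:(apply Cmod_ge_0)).
  assert (Hfirst : (r ^ 2 * (INR (S m) * Cmod z ^ m * (h * h)) <= INR (S m) * r ^ S (S m) * (h * h))%R).
  { replace (r ^ S (S m))%R with (r ^ 2 * r ^ m)%R by (simpl; ring).
    assert (0 <= r ^ 2)%R by nra. assert (0 <= h * h)%R by nra.
    apply Rle_trans with (r ^ 2 * (INR (S m) * r ^ m * (h * h)))%R; [|right; ring].
    apply Rmult_le_compat_l; [lra|]. apply Rmult_le_compat_r; [lra|]. apply Rmult_le_compat_l; lra. }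
  assert (Hsecond : (r ^ 2 * (Cmod y * E) <= INR (S m) * INR (S m) * r ^ S (S m) * (h * h))%R).
  { replace (r ^ S (S m))%R with (r * r ^ S m)%R by (simpl; ring).
    assert (0 <= r ^ 2 * E)%R by (apply Rmult_le_pos; [apply pow_le|]; lra).
    apply Rle_trans with (r * (r ^ 2 * E))%R.
    { replace (r ^ 2 * (Cmod y * E))%R with (Cmod y * (r ^ 2 * E))%R by ring.
      apply Rmult_le_compat_r; lra. }
    apply Rle_trans with (r * (INR (S m) * INR (S m) * r ^ S m * h ^ 2))%R.
    { apply Rmult_le_compat_l; lra. }
    right. ring. }
  rewrite (S_INR (S m)).
  assert (0 <= (INR (S m) + 1) * (r ^ S (S m) * (h * h)))%R
    by (apply Rmult_le_pos; [lra|apply Rmult_le_pos; [apply pow_le; lra|nra]]).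
  replace (h ^ 2)%R with (h * h)%R by ring.
  eapply Rle_trans.
  { apply Rmult_le_compat_l; [apply pow_le; lra|exact Htri]. }
  rewrite Rmult_plus_distr_l. lra.
Qed.

Lemma coef_remainder_bound (b : nat -> C) (r' q B : R) (y z : C) (k : nat) :
  (0 < r')%R -> (0 <= q)%R -> (Cmod (b k) * r' ^ k <= B * q ^ k)%R ->
  (Cmod y <= r')%R -> (Cmod z <= r')%R ->
  (Cmod (b k * (y ^ k - z ^ k - RtoC (INR k) * z ^ pred k * (y - z)))
     <= B / r' ^ 2 * Cmod (y - z) ^ 2 * ((INR k + 1) * (INR k + 1) * q ^ k))%R.
Proof.
  intros Hr' Hq HB Hy Hz. rewrite Cmod_mult.
  pose proof (Cpow_remainder_bound y z r' k ltac:(lra) Hy Hz) as Hrem.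
  set (h := Cmod (y - z)) in *. set (Ek := Cmod (y ^ k - z ^ k - _)) in *.
  assert (HEk : (0 <= Ek)%R) by apply Cmod_ge_0.
  assert (Hh2 : (0 <= h ^ 2)%R) by (apply pow_le, Cmod_ge_0).
  assert (Hr'2 : (0 < r' ^ 2)%R) by (apply pow_lt; lra).
  pose proof (pos_INR k). pose proof (Cmod_ge_0 (b k)).
  pose proof (pow_le q k Hq). pose proof (pow_le r' k ltac:(lra)).
  apply (Rmult_le_reg_l (r' ^ 2)); [lra|].
  replace (r' ^ 2 * (B / r' ^ 2 * h ^ 2 * ((INR k + 1) * (INR k + 1) * q ^ k)))%R
    with ((INR k + 1) * (INR k + 1) * h ^ 2 * (B * q ^ k))%R by (field; lra).
  apply Rle_trans with (INR k * INR k * h ^ 2 * (Cmod (b k) * r' ^ k))%R.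
  { replace (r' ^ 2 * (Cmod (b k) * Ek))%R with (Cmod (b k) * (r' ^ 2 * Ek))%R by ring.
    replace (INR k * INR k * h ^ 2 * (Cmod (b k) * r' ^ k))%R
      with (Cmod (b k) * (INR k * INR k * r' ^ k * h ^ 2))%R by ring.
    apply Rmult_le_compat_l; lra. }
  assert (Hkk : (0 <= INR k * INR k * h ^ 2)%R) by (apply Rmult_le_pos; nra).
  apply Rle_trans with (INR k * INR k * h ^ 2 * (B * q ^ k))%R; [apply Rmult_le_compat_l; lra|].
  apply Rmult_le_compat_r; [nra|]. apply Rmult_le_compat_r; nra.
Qed.

Lemma Csum_Cdiff (b : nat -> C) : converges_on_U b ->
  forall z, inU z -> Cdiff (Csum b) z (Csum (coef_deriv b) z).
Proof.
  intros Hb z Hz.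
  set (r := Cmod z). assert (Hr0 : (0 <= r)%R) by apply Cmod_ge_0.
  destruct (coef_geometric_decay b Hb r (conj Hr0 Hz)) as [r' [q [B [[Hr' [Hq HB0]] HB]]]].
  destruct (is_series_sqr_mult_pow q Hq) as [Sq [HSq0 HSq]].
  set (S1 := Csum (coef_deriv b) z).
  assert (HS1 : Cseries (coef_deriv b) z S1) by (apply Csum_correct, coef_deriv_converges; auto).
  assert (Hr'2 : (0 < r' ^ 2)%R) by (apply pow_lt; lra).
  set (K := (B / r' ^ 2 * Sq)%R).
  assert (HK : (0 <= K)%R) by (apply Rmult_le_pos; auto; apply Rdiv_le_0_compat; auto).
  intros eps Heps.
  exists (Rmin (r' - r) (eps / (K + 1))). split.
  { apply Rmin_pos. lra. apply Rdiv_lt_0_compat; lra. }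
  intros y Hy.
  set (h := Cmod (y - z)). assert (Hh : (0 <= h)%R) by apply Cmod_ge_0.
  assert (Hy1 : (h < r' - r)%R) by (eapply Rlt_le_trans; [exact Hy|apply Rmin_l]).
  assert (Hy2 : ((K + 1) * h <= eps)%R).
  { apply Rle_trans with ((K + 1) * (eps / (K + 1)))%R; [|right; field; lra].
    apply Rmult_le_compat_l; [lra|]. left. eapply Rlt_le_trans; [exact Hy|apply Rmin_r]. }
  assert (Hyr : (Cmod y <= r')%R).
  { replace y with ((y - z) + z) by ring. eapply Rle_trans. apply Cmod_triangle. fold r h. lra. }
  pose proof (Csum_correct b y (Hb y ltac:(unfold inU; lra))) as Sy.
  pose proof (Csum_correct b z (Hb z Hz)) as Sz.
  assert (HT : is_Cseries (fun k => b k * (RtoC (INR k) * z ^ pred k * (y - z))) (S1 * (y - z))).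
  { apply is_Cseries_decr_1; [simpl; ring|].
    apply (is_Cseries_ext (fun k => (y - z) * (coef_deriv b k * z ^ k)) _ ((y - z) * S1)).
    - intros k. unfold coef_deriv. simpl. ring.
    - ring.
    - apply is_Cseries_scal. exact HS1. }
  assert (HE : is_Cseries (fun k => b k * (y ^ k - z ^ k - RtoC (INR k) * z ^ pred k * (y - z)))
                 (Csum b y - Csum b z - S1 * (y - z))).
  { pose proof (is_Cseries_minus _ _ _ _ (is_Cseries_minus _ _ _ _ Sy Sz) HT) as H.
    eapply is_Cseries_ext; [| |exact H]; [intros k; simpl; ring|reflexivity]. }
  eapply Rle_trans.
  - apply (is_Cseries_Cmod_le _ _ (fun k => (B / r' ^ 2 * h ^ 2 * ((INR k + 1) * (INR k + 1) * q ^ k)))%R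
             (B / r' ^ 2 * h ^ 2 * Sq)%R HE).
    + intros k. apply coef_remainder_bound; [lra|lra|apply HB|exact Hyr|fold r; lra].
    + exact (is_series_scal (K := R_AbsRing) (V := R_NormedModule) (B / r' ^ 2 * h ^ 2)%R _ _ HSq).
  - replace (B / r' ^ 2 * h ^ 2 * Sq)%R with (K * h * h)%R by (unfold K; ring). nra.
Qed.

Lemma Csum_Cdiff2 (b : nat -> C) : converges_on_U b ->
  Cdiff2_on_U (Csum b) (Csum (coef_deriv b)) (Csum (coef_deriv (coef_deriv b))).
Proof.
  intros Hb z Hz. split; apply Csum_Cdiff; auto. apply coef_deriv_converges; auto.
Qed.

Lemma Cseries_at_0 (c : nat -> C) : Cseries c 0 (c 0%nat).
Proof.
  apply is_series_decr_1.
  match goal with |- is_series _ ?L => replace L with (RtoC 0) end.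
  - apply (is_Cseries_ext (fun _ => RtoC 0) _ (RtoC 0)); [intros k; simpl; ring|reflexivity|].
    intros P [eps HP]. exists 0%nat. intros N _. apply HP.
    match goal with |- ball _ _ ?X => replace X with (RtoC 0) end; [apply ball_center|].
    induction N as [|N IH].
    + rewrite sum_O. reflexivity.
    + rewrite sum_Sn, <- IH. unfold plus; simpl. ring.
  - unfold plus, opp; simpl. ring.
Qed.

Lemma Cseries_deriv (b : nat -> C) (h h1 : C -> C) :
  (forall z, inU z -> Cseries b z (h z)) -> (forall z, inU z -> Cdiff h z (h1 z)) ->
  forall z, inU z -> Cseries (coef_deriv b) z (h1 z).
Proof.
  intros Hs Hd z Hz.
  assert (Hc : converges_on_U b) by (intros w Hw; exists (h w); auto).
  replace (h1 z) with (Csum (coef_deriv b) z).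
  - apply Csum_correct, coef_deriv_converges; auto.
  - apply (Cdiff_unique h z); [|apply Hd; auto].
    apply (Cdiff_ext_loc (Csum b)); [|apply Csum_Cdiff; auto].
    exists (1 - Cmod z)%R. split. unfold inU in Hz; lra.
    intros y Hy. apply Csum_eq, Hs, (inU_ball z Hz y Hy).
Qed.

Lemma Cseries_INR_mult (b : nat -> C) (h h1 : C -> C) :
  (forall z, inU z -> Cseries b z (h z)) -> (forall z, inU z -> Cdiff h z (h1 z)) ->
  forall z, inU z -> Cseries (fun k => RtoC (INR k) * b k) z (z * h1 z).
Proof.
  intros Hs Hd z Hz. apply is_Cseries_decr_1; [simpl; ring|].
  eapply is_Cseries_ext; [| |exact (is_Cseries_scal z _ _ (Cseries_deriv b h h1 Hs Hd z Hz))].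
  - intros k. unfold coef_deriv. simpl. ring.
  - reflexivity.
Qed.

Lemma Cseries_pow_factor (m : nat) : forall (c : nat -> C) z s,
  Cseries c z s -> (forall k, (k < m)%nat -> c k = 0) ->
  exists s', Cseries (fun k => c (k + m)%nat) z s' /\ s = z ^ m * s'.
Proof.
  induction m as [|m IH]; intros c z s Hs Hc.
  - exists s. split; [|simpl; ring].
    eapply is_Cseries_ext; [| |exact Hs]; [intros k; rewrite Nat.add_0_r|]; reflexivity.
  - assert (Hc0 : c 0%nat = 0) by (apply Hc; lia).
    assert (Hs1 : exists s1, Cseries (fun k => c (S k)) z s1 /\ s = z * s1).
    { destruct (Ceq_dec z 0) as [->|Ez].
      - exists (c 1%nat). split. apply (Cseries_at_0 (fun k => c (S k))).
        rewrite (Cseries_unique c 0 s (c 0%nat) Hs (Cseries_at_0 c)), Hc0. ring.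
      - exists (s / z). split; [|field; auto].
        eapply is_Cseries_ext; [| |exact (is_Cseries_scal (/ z) _ _ (is_Cseries_incr_1 _ _ Hs))].
        + intros k. simpl. field. auto.
        + simpl. rewrite Hc0. field. auto. }
    destruct Hs1 as [s1 [Hs1 E1]].
    destruct (IH (fun k => c (S k)) z s1 Hs1) as [s' [Hs' E']].
    { intros k Hk. apply Hc. lia. }
    exists s'. split.
    + eapply is_Cseries_ext; [| |exact Hs']; [intros k; simpl; do 2 f_equal; lia|reflexivity].
    + rewrite E1, E'. simpl. ring.
Qed.

Lemma Cseries_pow_factor_on_U (m : nat) (c : nat -> C) (h : C -> C) :
  (forall w, inU w -> Cseries c w (h w)) -> (forall k, (k < m)%nat -> c k = 0) ->
  converges_on_U (fun k => c (k + m)%nat) /\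
  forall w, inU w -> h w = w ^ m * Csum (fun k => c (k + m)%nat) w.
Proof.
  intros Hs Hc.
  assert (Hf : forall w, inU w ->
            exists s', Cseries (fun k => c (k + m)%nat) w s' /\ h w = w ^ m * s')
    by (intros w Hw; apply Cseries_pow_factor; auto).
  split.
  - intros w Hw. destruct (Hf w Hw) as [s' [Hs' _]]. exists s'. exact Hs'.
  - intros w Hw. destruct (Hf w Hw) as [s' [Hs' ->]]. rewrite (Csum_eq _ _ _ Hs'). reflexivity.
Qed.


(** * Real derivatives along paths, polar coordinates *)

Lemma Cmod_le_Rabs_sum (w : C) : (Cmod w <= Rabs (fst w) + Rabs (snd w))%R.
Proof.
  destruct w as [a b]. unfold Cmod; simpl.
  pose proof (Rabs_pos a); pose proof (Rabs_pos b).
  rewrite <- (sqrt_Rsqr (Rabs a + Rabs b)) by lra.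
  apply sqrt_le_1_alt. unfold Rsqr.
  assert (a * a = Rabs a * Rabs a)%R by (rewrite <- Rabs_mult; rewrite Rabs_right; nra).
  assert (b * b = Rabs b * Rabs b)%R by (rewrite <- Rabs_mult; rewrite Rabs_right; nra).
  nra.
Qed.

Lemma path_increment_bound (P Q : R -> R) (t P' Q' eta : R) :
  derivable_pt_lim P t P' -> derivable_pt_lim Q t Q' -> (0 < eta)%R ->
  exists del : posreal, forall s, s <> 0%R -> (Rabs s < del)%R ->
    (Cmod (((P (t + s) - P t)%R, (Q (t + s) - Q t)%R) - RtoC s * (P', Q')) <= eta * Rabs s)%R.
Proof.
  intros HP HQ Heta.
  destruct (HP (eta / 2)%R ltac:(lra)) as [dP HdP].
  destruct (HQ (eta / 2)%R ltac:(lra)) as [dQ HdQ].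
  exists (mkposreal _ (Rmin_pos _ _ (cond_pos dP) (cond_pos dQ))). simpl. intros s Hs0 Hs.
  specialize (HdP s Hs0 (Rlt_le_trans _ _ _ Hs (Rmin_l _ _))).
  specialize (HdQ s Hs0 (Rlt_le_trans _ _ _ Hs (Rmin_r _ _))).
  eapply Rle_trans. apply Cmod_le_Rabs_sum. simpl.
  replace (P (t + s) - P t + - (s * P' - 0 * Q'))%R with (s * ((P (t + s) - P t) / s - P'))%R
    by (field; auto).
  replace (Q (t + s) - Q t + - (s * Q' + 0 * P'))%R with (s * ((Q (t + s) - Q t) / s - Q'))%R
    by (field; auto).
  rewrite !Rabs_mult. pose proof (Rabs_pos s). nra.
Qed.

Lemma derivable_pt_lim_Re_comp (h : C -> C) (P Q : R -> R) (t P' Q' : R) (l : C) :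
  derivable_pt_lim P t P' -> derivable_pt_lim Q t Q' -> Cdiff h (P t, Q t) l ->
  derivable_pt_lim (fun s => Re (h (P s, Q s))) t (Re (l * (P', Q'))).
Proof.
  intros HP HQ Hh eps Heps.
  set (D := (P', Q') : C). set (z := (P t, Q t) : C) in *.
  pose proof (Cmod_ge_0 l) as Hl0. pose proof (Cmod_ge_0 D) as HD0.
  set (e1 := (eps / (2 * (Cmod D + 1)))%R).
  set (eta := Rmin 1 (eps / (2 * (Cmod l + 1)))).
  assert (Heta : (0 < eta)%R) by (apply Rmin_pos; [lra| apply Rdiv_lt_0_compat; lra]).
  assert (Heta1 : (eta <= 1)%R) by apply Rmin_l.
  assert (He1e : (e1 * (Cmod D + 1) = eps / 2)%R) by (unfold e1; field; lra).
  assert (Hetal : (eta * (Cmod l + 1) <= eps / 2)%R).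
  { apply Rle_trans with (eps / (2 * (Cmod l + 1)) * (Cmod l + 1))%R; [|right; field; lra].
    apply Rmult_le_compat_r; [lra|apply Rmin_r]. }
  assert (He1 : (0 < e1)%R) by (apply Rdiv_lt_0_compat; lra).
  destruct (Hh e1 He1) as [d1 [Hd1 B1]].
  destruct (path_increment_bound P Q t P' Q' eta HP HQ Heta) as [dPQ HPQ].
  assert (Hd1' : (0 < d1 / (Cmod D + 1))%R) by (apply Rdiv_lt_0_compat; lra).
  exists (mkposreal _ (Rmin_pos _ _ (cond_pos dPQ) Hd1')). simpl. intros s Hs0 Hs.
  assert (Has : (0 < Rabs s)%R) by (apply Rabs_pos_lt; auto).
  set (dz := ((P (t + s) - P t)%R, (Q (t + s) - Q t)%R) : C).
  assert (Hdz : (Cmod (dz - RtoC s * D) <= eta * Rabs s)%R)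
    by exact (HPQ s Hs0 (Rlt_le_trans _ _ _ Hs (Rmin_l _ _))).
  assert (Hdzm : (Cmod dz <= (Cmod D + 1) * Rabs s)%R).
  { replace dz with ((dz - RtoC s * D) + RtoC s * D) by ring.
    eapply Rle_trans. apply Cmod_triangle. rewrite Cmod_mult, Cmod_R. nra. }
  assert (Hpt : (P (t + s)%R, Q (t + s)%R) = z + dz)
    by (apply injective_projections; simpl; ring).
  assert (Hdz1 : (Cmod (z + dz - z) < d1)%R).
  { replace (z + dz - z) with dz by ring. eapply Rle_lt_trans; [exact Hdzm|].
    apply Rlt_le_trans with ((Cmod D + 1) * (d1 / (Cmod D + 1)))%R; [|right; field; lra].
    apply Rmult_lt_compat_l; [lra|]. eapply Rlt_le_trans; [exact Hs|apply Rmin_r]. }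
  specialize (B1 _ Hdz1). replace (z + dz - z) with dz in B1 by ring.
  set (E := h (z + dz) - h z - RtoC s * (l * D)).
  assert (HEb : (Cmod E <= e1 * ((Cmod D + 1) * Rabs s) + Cmod l * (eta * Rabs s))%R).
  { replace E with ((h (z + dz) - h z - l * dz) + l * (dz - RtoC s * D)) by (unfold E; ring).
    eapply Rle_trans. apply Cmod_triangle. rewrite Cmod_mult.
    apply Rplus_le_compat; [eapply Rle_trans; [exact B1|]|]; apply Rmult_le_compat_l; lra. }
  rewrite Hpt. replace (fst l * P' - snd l * Q')%R with (Re (l * D)) by (destruct l; simpl; ring).
  replace ((Re (h (z + dz)%C) - Re (h z)) / s - Re (l * D)%C)%R with (Re E / s)%R.
  2:{ unfold E. destruct (h (z + dz)), (h z), l. unfold D. simpl. field. auto. }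
  unfold Rdiv. rewrite Rabs_mult, Rabs_inv.
  apply (Rmult_lt_reg_r (Rabs s)); auto. rewrite Rmult_assoc, Rinv_l, Rmult_1_r by lra.
  eapply Rle_lt_trans. apply re_le_Cmod. eapply Rle_lt_trans. exact HEb. nra.
Qed.

Lemma derivable_pt_lim_Im_comp (h : C -> C) (P Q : R -> R) (t P' Q' : R) (l : C) :
  derivable_pt_lim P t P' -> derivable_pt_lim Q t Q' -> Cdiff h (P t, Q t) l ->
  derivable_pt_lim (fun s => Im (h (P s, Q s))) t (Im (l * (P', Q'))).
Proof.
  intros HP HQ Hh.
  pose proof (derivable_pt_lim_Re_comp (fun x => - Ci * h x) P Q t P' Q' (- Ci * l) HP HQ
                (Cdiff_scal _ _ _ _ Hh)) as H.
  replace (Im (l * (P', Q'))) with (Re (- Ci * l * (P', Q'))) by (destruct l; simpl; ring).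
  replace (fun s => Im (h (P s, Q s))) with (fun s => Re (- Ci * h (P s, Q s))); [exact H|].
  apply functional_extensionality. intro s. destruct (h (P s, Q s)). simpl. ring.
Qed.

Lemma Rabs_sub_le_of_deriv_le_1 (f f' : R -> R) (a b : R) :
  (forall c, derivable_pt_lim f c (f' c)) -> (forall c, (Rabs (f' c) <= 1)%R) ->
  (Rabs (f b - f a) <= Rabs (b - a))%R.
Proof.
  intros Hd Hb. destruct (MVT_abs f f' a b (fun c _ => Hd c)) as [c [-> _]].
  pose proof (Hb c). pose proof (Rabs_pos (b - a)). nra.
Qed.

Definition polar (r t : R) : C := ((r * cos t)%R, (r * sin t)%R).

Lemma Cmod_polar r t : Cmod (polar r t) = Rabs r.
Proof.
  unfold polar, Cmod. simpl. rewrite <- sqrt_Rsqr_abs. f_equal. unfold Rsqr.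
  pose proof (sin2_cos2 t). unfold Rsqr in H. nra.
Qed.

Lemma polar_lipschitz r t r' t' :
  (Cmod (polar r' t' - polar r t) <= 2 * Rabs (r' - r) + 2 * Rabs r * Rabs (t' - t))%R.
Proof.
  assert (Hcos : (Rabs (cos t' - cos t) <= Rabs (t' - t))%R).
  { apply (Rabs_sub_le_of_deriv_le_1 cos (fun x => - sin x)%R); [apply derivable_pt_lim_cos|].
    intros c. rewrite Rabs_Ropp. apply Rabs_le, SIN_bound. }
  assert (Hsin : (Rabs (sin t' - sin t) <= Rabs (t' - t))%R).
  { apply (Rabs_sub_le_of_deriv_le_1 sin cos); [apply derivable_pt_lim_sin|].
    intros c. apply Rabs_le, COS_bound. }
  eapply Rle_trans. apply Cmod_le_Rabs_sum. unfold polar. simpl.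
  replace (r' * cos t' + - (r * cos t))%R with ((r' - r) * cos t' + r * (cos t' - cos t))%R by ring.
  replace (r' * sin t' + - (r * sin t))%R with ((r' - r) * sin t' + r * (sin t' - sin t))%R by ring.
  assert (Rabs (cos t') <= 1)%R by apply Rabs_le, COS_bound.
  assert (Rabs (sin t') <= 1)%R by apply Rabs_le, SIN_bound.
  pose proof (Rabs_pos (r' - r)). pose proof (Rabs_pos r).
  pose proof (Rabs_triang ((r' - r) * cos t') (r * (cos t' - cos t))).
  pose proof (Rabs_triang ((r' - r) * sin t') (r * (sin t' - sin t))).
  rewrite !Rabs_mult in *. nra.
Qed.

Lemma polar_surj (w : C) : exists t, (0 <= t <= 2 * PI)%R /\ w = polar (Cmod w) t.
Proof.
  pose proof PI_RGT_0.
  destruct (Ceq_dec w 0) as [->|E].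
  { exists 0%R. split; [lra|]. rewrite Cmod_0. unfold polar. rewrite !Rmult_0_l. reflexivity. }
  assert (Hm : (0 < Cmod w)%R) by (apply Cmod_gt_0; auto).
  destruct w as [x y].
  assert (Hm2 : (Cmod (x, y) * Cmod (x, y) = x * x + y * y)%R).
  { unfold Cmod. simpl. rewrite sqrt_sqrt; nra. }
  set (m := Cmod (x, y)) in *. set (c := (x / m)%R).
  assert (Hc : (-1 <= c <= 1)%R).
  { unfold c. split; apply (Rmult_le_reg_r m); auto; unfold Rdiv; rewrite Rmult_assoc, Rinv_l; nra. }
  assert (Hs : sqrt (1 - c²) = (Rabs y / m)%R).
  { apply Rsqr_inj. apply sqrt_pos. apply Rdiv_le_0_compat. apply Rabs_pos. auto.
    rewrite Rsqr_sqrt by (unfold Rsqr; nra).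
    assert (Ey : (Rabs y * Rabs y = y * y)%R) by (rewrite <- Rabs_mult; apply Rabs_right; nra).
    unfold c, Rsqr. apply (Rmult_eq_reg_r (m * m)); [|nra].
    replace (Rabs y / m * (Rabs y / m) * (m * m))%R with (Rabs y * Rabs y)%R by (field; lra).
    replace ((1 - x / m * (x / m)) * (m * m))%R with (m * m - x * x)%R by (field; lra). lra. }
  pose proof (acos_bound c).
  destruct (Rle_or_lt 0 y) as [Hy|Hy].
  - exists (acos c). split; [lra|].
    unfold polar. rewrite cos_acos, sin_acos, Hs, Rabs_right by (auto; lra).
    unfold c. f_equal; field; lra.
  - exists (2 * PI - acos c)%R. split; [lra|].
    unfold polar. rewrite cos_minus, sin_minus, cos_2PI, sin_2PI, cos_acos, sin_acos, Hs, Rabs_left by (auto; lra).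
    unfold c. f_equal; field; lra.
Qed.

(** * Extrema of real functions *)

Section RealExtrema.
Local Open Scope R_scope.

Definition continuous2_at (V : R -> R -> R) (x y : R) : Prop :=
  forall eps, 0 < eps -> exists del, 0 < del /\
    forall x' y', Rabs (x' - x) < del -> Rabs (y' - y) < del -> Rabs (V x' y' - V x y) < eps.

Lemma continuity_pt_intro (f : R -> R) (x : R) :
  (forall eps, 0 < eps -> exists del, 0 < del /\
     forall x', Rabs (x' - x) < del -> Rabs (f x' - f x) < eps) ->
  continuity_pt f x.
Proof.
  intros H eps Heps. destruct (H eps Heps) as [d [Hd Hb]]. exists d. split; [lra|].
  intros x' [_ Hx']. apply Hb. exact Hx'.
Qed.

Lemma unif_continuous2_rect (V : R -> R -> R) (a b c d : R) :
  (forall x y, a <= x <= b -> c <= y <= d -> continuous2_at V x y) ->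
  forall eps, 0 < eps -> exists dd, 0 < dd /\ forall x y x' y', a <= x <= b -> c <= y <= d ->
    Rabs (x' - x) < dd -> Rabs (y' - y) < dd -> Rabs (V x' y' - V x y) < eps.
Proof.
  intros Hc eps Heps.
  set (Pd := fun u v del => 0 < del /\ (a <= u <= b -> c <= v <= d ->
    forall x' y', Rabs (x' - u) < del -> Rabs (y' - v) < del -> Rabs (V x' y' - V u v) < eps / 2)).
  assert (Hex : forall u v, exists del, Pd u v del).
  { intros u v. destruct (classic (a <= u <= b /\ c <= v <= d)) as [[Hu Hv]|Hn].
    - destruct (Hc u v Hu Hv (eps / 2) ltac:(lra)) as [del [Hdel Hb]]. exists del. split; auto.
    - exists 1. split; [lra|]. intros Hu Hv. tauto. }
  set (dfun := fun u v => epsilon (inhabits 1) (Pd u v)).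
  assert (Hsp : forall u v, Pd u v (dfun u v)) by (intros u v; apply epsilon_spec, Hex).
  assert (Hdpos : forall u v, 0 < dfun u v / 2) by (intros u v; destruct (Hsp u v); lra).
  destruct (compactness_value_2d a b c d (fun u v => mkposreal _ (Hdpos u v))) as [dd Hdd].
  exists dd. split; [apply cond_pos|]. intros x y x' y' Hx Hy Hxx Hyy.
  destruct (classic (Rabs (V x' y' - V x y) < eps)) as [H|H]; auto. exfalso.
  apply (Hdd x y Hx Hy). intros [u [v [Hu [Hv [Hxu [Hyv Hdu]]]]]]. simpl in *.
  destruct (Hsp u v) as [Hd Hb]. specialize (Hb Hu Hv).
  assert (H1 : Rabs (V x y - V u v) < eps / 2) by (apply Hb; lra).
  assert (H2 : Rabs (V x' y' - V u v) < eps / 2).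
  { apply Hb.
    - replace (x' - u) with ((x' - x) + (x - u)) by ring.
      eapply Rle_lt_trans; [apply Rabs_triang|lra].
    - replace (y' - v) with ((y' - y) + (y - v)) by ring.
      eapply Rle_lt_trans; [apply Rabs_triang|lra]. }
  apply H. replace (V x' y' - V x y) with ((V x' y' - V u v) - (V x y - V u v)) by ring.
  eapply Rle_lt_trans; [apply Rabs_triang|]. rewrite Rabs_Ropp. lra.
Qed.

(* Continuity is asked on a slightly wider strip in [x] since [continuity_ab_maj] needs
   continuity of [x |-> max_y V x y] as a function on all of [R]. *)
Lemma continuous2_rect_max (V : R -> R -> R) (a b c d eta : R) :
  a <= b -> c <= d -> 0 < eta ->
  (forall x y, a - eta <= x <= b + eta -> c <= y <= d -> continuous2_at V x y) ->
  exists x0 y0, a <= x0 <= b /\ c <= y0 <= d /\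
    forall x y, a <= x <= b -> c <= y <= d -> V x y <= V x0 y0.
Proof.
  intros Hab Hcd Heta Hc.
  set (PY := fun x y => c <= y <= d /\ forall y', c <= y' <= d -> V x y' <= V x y).
  assert (HY : forall x, a - eta <= x <= b + eta -> exists y, PY x y).
  { intros x Hx. destruct (continuity_ab_maj (fun y => V x y) c d Hcd) as [y [Hy1 Hy2]].
    - intros y Hy. apply continuity_pt_intro. intros eps Heps.
      destruct (Hc x y Hx Hy eps Heps) as [del [Hdel Hb]]. exists del. split; auto.
      intros y' Hy'. apply Hb; auto. rewrite Rminus_diag, Rabs_R0. auto.
    - exists y. split; auto. }
  set (Y := fun x => epsilon (inhabits c) (PY x)).
  assert (HYs : forall x, a - eta <= x <= b + eta -> PY x (Y x))
    by (intros x Hx; apply epsilon_spec, HY, Hx).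
  destruct (continuity_ab_maj (fun x => V x (Y x)) a b Hab) as [x0 [Hm Hx0]].
  - intros x Hx. apply continuity_pt_intro. intros eps Heps.
    destruct (unif_continuous2_rect V (a - eta) (b + eta) c d Hc eps Heps) as [dd [Hdd Hb]].
    exists (Rmin dd eta). split; [apply Rmin_pos; auto|].
    intros x' Hx'.
    assert (Hx'1 : Rabs (x' - x) < dd) by (eapply Rlt_le_trans; [exact Hx'|apply Rmin_l]).
    assert (Hx'2 : Rabs (x' - x) < eta) by (eapply Rlt_le_trans; [exact Hx'|apply Rmin_r]).
    assert (Hxr : a - eta <= x <= b + eta) by lra.
    assert (Hx'r : a - eta <= x' <= b + eta) by (apply Rabs_def2 in Hx'2; lra).
    destruct (HYs x Hxr) as [HYx HYxm]. destruct (HYs x' Hx'r) as [HYx' HYx'm].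
    assert (E1 : Rabs (V x' (Y x) - V x (Y x)) < eps).
    { apply Hb; auto. rewrite Rminus_diag, Rabs_R0. auto. }
    assert (E2 : Rabs (V x (Y x') - V x' (Y x')) < eps).
    { apply Hb; auto. rewrite Rabs_minus_sym; auto. rewrite Rminus_diag, Rabs_R0. auto. }
    pose proof (HYx'm (Y x) HYx). pose proof (HYxm (Y x') HYx').
    apply Rabs_def2 in E1. apply Rabs_def2 in E2. apply Rabs_def1; lra.
  - exists x0, (Y x0). destruct (HYs x0 ltac:(lra)) as [HY0 _]. split; auto. split; auto.
    intros x y Hx Hy. destruct (HYs x ltac:(lra)) as [_ HYm].
    eapply Rle_trans; [apply HYm; auto|apply (Hm x Hx)].
Qed.

Lemma second_deriv_nonpos_at_max (u u1 : R -> R) (s d : R) : 0 < d ->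
  (forall t, Rabs t < d -> derivable_pt_lim u t (u1 t)) -> derivable_pt_lim u1 0 s ->
  (forall t, Rabs t < d -> u t <= u 0) -> s <= 0.
Proof.
  intros Hd Hu Hs Hm.
  assert (H0 : u1 0 = 0).
  { apply (deriv_maximum u (- d) d 0 (exist _ (u1 0) (Hu 0 ltac:(rewrite Rabs_R0; lra))));
      try lra.
    intros x H1 H2. apply Hm. apply Rabs_def1; lra. }
  destruct (Rle_or_lt s 0) as [H|H]; auto. exfalso.
  destruct (Hs (s / 2) ltac:(lra)) as [d1 Hd1].
  set (t := Rmin d d1 / 2).
  assert (Ht : 0 < t /\ t < d /\ t < d1).
  { unfold t. pose proof (Rmin_l d d1). pose proof (Rmin_r d d1).
    pose proof (Rmin_pos d d1 Hd (cond_pos d1)). lra. }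
  destruct (MVT_cor2 u u1 0 t ltac:(lra)) as [c [Hc Hct]].
  { intros c Hc. apply Hu. apply Rabs_def1; lra. }
  assert (Hc1 : 0 < u1 c).
  { specialize (Hd1 c ltac:(lra) ltac:(rewrite Rabs_right; lra)).
    rewrite Rplus_0_l, H0, Rminus_0_r in Hd1. apply Rabs_def2 in Hd1. destruct Hd1 as [_ Hd1].
    assert (Hq : 0 < u1 c / c) by lra.
    apply (Rmult_lt_compat_r c) in Hq; [|lra].
    unfold Rdiv in Hq. rewrite Rmult_assoc, Rinv_l in Hq; lra. }
  assert (u t <= u 0) by (apply Hm; apply Rabs_def1; lra).
  assert (0 < u1 c * (t - 0)) by (apply Rmult_lt_0_compat; lra).
  lra.
Qed.

Lemma deriv_nonneg_at_left_max (f : R -> R) (x D d : R) : 0 < d -> derivable_pt_lim f x D ->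
  (forall h, 0 < h < d -> f (x - h) <= f x) -> 0 <= D.
Proof.
  intros Hd HD Hm. destruct (Rle_or_lt 0 D) as [H|H]; auto. exfalso.
  destruct (HD (- D / 2) ltac:(lra)) as [d1 Hd1].
  set (h := Rmin d d1 / 2).
  assert (Hh : 0 < h /\ h < d /\ h < d1).
  { unfold h. pose proof (Rmin_l d d1). pose proof (Rmin_r d d1).
    pose proof (Rmin_pos d d1 Hd (cond_pos d1)). lra. }
  specialize (Hd1 (- h) ltac:(lra) ltac:(rewrite Rabs_Ropp, Rabs_right; lra)).
  apply Rabs_def2 in Hd1. destruct Hd1 as [Hd1 _].
  specialize (Hm h ltac:(lra)).
  replace (x + - h) with (x - h) in Hd1 by ring.
  set (q := (f (x - h) - f x) / - h) in *.
  assert (E : f (x - h) - f x = q * (- h)) by (unfold q; field; lra).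
  nra.
Qed.

Lemma derivable_pt_lim_affine (a b t : R) : derivable_pt_lim (fun s => a + s * b) t b.
Proof. apply is_derive_Reals. auto_derive; auto. ring. Qed.

Lemma derivable_pt_lim_mult_const (c t : R) : derivable_pt_lim (fun s => s * c) t c.
Proof. apply is_derive_Reals. auto_derive; auto. ring. Qed.

Lemma derivable_pt_lim_scal_cos (r t : R) : derivable_pt_lim (fun s => r * cos s) t (- r * sin t).
Proof. apply is_derive_Reals. auto_derive; auto. ring. Qed.

Lemma derivable_pt_lim_scal_sin (r t : R) : derivable_pt_lim (fun s => r * sin s) t (r * cos t).
Proof. apply is_derive_Reals. auto_derive; auto. ring. Qed.

Lemma derivable_pt_lim_sqnorm_sum (X Y P Q : R -> R) (eps t X1 Y1 P1 Q1 : R) :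
  derivable_pt_lim X t X1 -> derivable_pt_lim Y t Y1 ->
  derivable_pt_lim P t P1 -> derivable_pt_lim Q t Q1 ->
  derivable_pt_lim (fun s => X s * X s + Y s * Y s + eps * (P s * P s + Q s * Q s)) t
    (2 * X t * X1 + 2 * Y t * Y1 + eps * (2 * P t * P1 + 2 * Q t * Q1)).
Proof.
  intros HX HY HP HQ.
  pose proof (derivable_pt_lim_plus _ _ _ _ _
    (derivable_pt_lim_plus _ _ _ _ _ (derivable_pt_lim_mult _ _ _ _ _ HX HX)
       (derivable_pt_lim_mult _ _ _ _ _ HY HY))
    (derivable_pt_lim_mult _ _ _ _ _ (derivable_pt_lim_const eps t)
       (derivable_pt_lim_plus _ _ _ _ _ (derivable_pt_lim_mult _ _ _ _ _ HP HP)
          (derivable_pt_lim_mult _ _ _ _ _ HQ HQ)))) as H.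
  unfold plus_fct, mult_fct, fct_cte in H.
  match type of H with derivable_pt_lim _ _ ?L =>
    replace (2 * X t * X1 + 2 * Y t * Y1 + eps * (2 * P t * P1 + 2 * Q t * Q1)) with L by ring end.
  exact H.
Qed.

Lemma derivable_pt_lim_sqnorm_sum_deriv (X Y P Q X1 Y1 : R -> R) (eps ex ey X2 Y2 : R) :
  derivable_pt_lim X 0 (X1 0) -> derivable_pt_lim Y 0 (Y1 0) ->
  derivable_pt_lim P 0 ex -> derivable_pt_lim Q 0 ey ->
  derivable_pt_lim X1 0 X2 -> derivable_pt_lim Y1 0 Y2 ->
  derivable_pt_lim (fun s => 2 * X s * X1 s + 2 * Y s * Y1 s + eps * (2 * P s * ex + 2 * Q s * ey)) 0
    (2 * (X1 0 * X1 0 + X 0 * X2) + 2 * (Y1 0 * Y1 0 + Y 0 * Y2) + eps * (2 * ex * ex + 2 * ey * ey)).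
Proof.
  intros HX HY HP HQ HX1 HY1.
  pose proof (derivable_pt_lim_const 2 0) as H2.
  pose proof (derivable_pt_lim_plus _ _ _ _ _ (derivable_pt_lim_plus _ _ _ _ _
     (derivable_pt_lim_mult _ _ _ _ _ (derivable_pt_lim_mult _ _ _ _ _ H2 HX) HX1)
     (derivable_pt_lim_mult _ _ _ _ _ (derivable_pt_lim_mult _ _ _ _ _ H2 HY) HY1))
     (derivable_pt_lim_mult _ _ _ _ _ (derivable_pt_lim_const eps 0) (derivable_pt_lim_plus _ _ _ _ _
        (derivable_pt_lim_mult _ _ _ _ _ (derivable_pt_lim_mult _ _ _ _ _ H2 HP)
           (derivable_pt_lim_const ex 0))
        (derivable_pt_lim_mult _ _ _ _ _ (derivable_pt_lim_mult _ _ _ _ _ H2 HQ)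
           (derivable_pt_lim_const ey 0))))) as H.
  unfold plus_fct, mult_fct, fct_cte in H.
  match type of H with derivable_pt_lim _ _ ?L =>
    replace (2 * (X1 0 * X1 0 + X 0 * X2) + 2 * (Y1 0 * Y1 0 + Y 0 * Y2)
             + eps * (2 * ex * ex + 2 * ey * ey)) with L by ring end.
  exact H.
Qed.

End RealExtrema.

(** * Maximum principle and Jack's lemma *)

Lemma Cmod_scal_unit (t ex ey : R) :
  (ex * ex + ey * ey = 1)%R -> Cmod ((t * ex)%R, (t * ey)%R) = Rabs t.
Proof.
  intros H. replace ((t * ex)%R, (t * ey)%R) with (RtoC t * (ex, ey))
    by (apply injective_projections; simpl; ring).
  rewrite Cmod_mult, Cmod_R. unfold Cmod. simpl.
  replace (ex * (ex * 1) + ey * (ey * 1))%R with 1%R by lra. rewrite sqrt_1. ring.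
Qed.

(* The term [eps |z|^2] makes the Laplacian of [|g|^2 + eps |z|^2] positive, which rules out
   interior maxima; letting [eps -> 0] gives the maximum principle for [|g|]. *)
Definition perturbed_sqnorm (g : C -> C) (eps : R) (z : C) : R :=
  (Re (g z) * Re (g z) + Im (g z) * Im (g z) + eps * (Re z * Re z + Im z * Im z))%R.

Lemma perturbed_sqnorm_Cmod g eps z :
  perturbed_sqnorm g eps z = (Cmod (g z) ^ 2 + eps * Cmod z ^ 2)%R.
Proof. unfold perturbed_sqnorm. rewrite !Cmod2_alt. ring. Qed.

Lemma perturbed_sqnorm_second_dir (g g1 g2 : C -> C) (eps : R) (z1 : C) (d ex ey : R) :
  (ex * ex + ey * ey = 1)%R -> (0 < d)%R ->
  (forall z, (Cmod (z - z1) < d)%R -> Cdiff g z (g1 z) /\ Cdiff g1 z (g2 z)) ->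
  (forall z, (Cmod (z - z1) < d)%R -> (perturbed_sqnorm g eps z <= perturbed_sqnorm g eps z1)%R) ->
  (2 * (Re ((ex, ey) * g1 z1) * Re ((ex, ey) * g1 z1) + Re (g z1) * Re ((ex, ey) * g2 z1 * (ex, ey)))
   + 2 * (Im ((ex, ey) * g1 z1) * Im ((ex, ey) * g1 z1) + Im (g z1) * Im ((ex, ey) * g2 z1 * (ex, ey)))
   + eps * (2 * ex * ex + 2 * ey * ey) <= 0)%R.
Proof.
  intros He Hd HD Hm.
  set (e := (ex, ey) : C).
  set (P := fun s => (Re z1 + s * ex)%R). set (Q := fun s => (Im z1 + s * ey)%R).
  pose proof (derivable_pt_lim_affine (Re z1) ex) as HP.
  pose proof (derivable_pt_lim_affine (Im z1) ey) as HQ.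
  assert (HPQ : forall s, Cmod ((P s, Q s) - z1) = Rabs s).
  { intros s. rewrite <- (Cmod_scal_unit s ex ey He). f_equal.
    destruct z1. apply injective_projections; unfold P, Q; simpl; ring. }
  assert (Hz1 : (P 0, Q 0) = z1) by (destruct z1; unfold P, Q; simpl; f_equal; ring).
  set (X := fun s => Re (g (P s, Q s))). set (Y := fun s => Im (g (P s, Q s))).
  set (X1 := fun s => Re (e * g1 (P s, Q s))). set (Y1 := fun s => Im (e * g1 (P s, Q s))).
  assert (HdX : forall t, (Rabs t < d)%R ->
            derivable_pt_lim X t (X1 t) /\ derivable_pt_lim Y t (Y1 t)).
  { intros t Ht. destruct (HD (P t, Q t)) as [Hg _]; [rewrite HPQ; auto|].
    unfold X1, Y1. rewrite Cmult_comm. split.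
    - exact (derivable_pt_lim_Re_comp g P Q t ex ey _ (HP t) (HQ t) Hg).
    - exact (derivable_pt_lim_Im_comp g P Q t ex ey _ (HP t) (HQ t) Hg). }
  assert (Hg10 : Cdiff (fun z => e * g1 z) (P 0, Q 0) (e * g2 (P 0, Q 0))).
  { apply Cdiff_scal. apply HD. rewrite HPQ, Rabs_R0. auto. }
  pose proof (derivable_pt_lim_Re_comp _ P Q 0 ex ey _ (HP 0%R) (HQ 0%R) Hg10) as HX1.
  pose proof (derivable_pt_lim_Im_comp _ P Q 0 ex ey _ (HP 0%R) (HQ 0%R) Hg10) as HY1.
  set (u := fun s => (X s * X s + Y s * Y s + eps * (P s * P s + Q s * Q s))%R).
  set (u1 := fun s => (2 * X s * X1 s + 2 * Y s * Y1 s + eps * (2 * P s * ex + 2 * Q s * ey))%R).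
  assert (Hu : forall t, (Rabs t < d)%R -> derivable_pt_lim u t (u1 t)).
  { intros t Ht. destruct (HdX t Ht). apply derivable_pt_lim_sqnorm_sum; auto. }
  destruct (HdX 0%R ltac:(rewrite Rabs_R0; auto)) as [HX0 HY0].
  pose proof (derivable_pt_lim_sqnorm_sum_deriv X Y P Q X1 Y1 eps ex ey _ _
                HX0 HY0 (HP 0%R) (HQ 0%R) HX1 HY1) as Hu1.
  assert (Hmax : forall t, (Rabs t < d)%R -> (u t <= u 0)%R).
  { intros t Ht. pose proof (Hm (P t, Q t)) as H. rewrite HPQ in H. specialize (H Ht).
    unfold perturbed_sqnorm in H. rewrite <- Hz1 in H. exact H. }
  pose proof (second_deriv_nonpos_at_max u u1 _ d Hd Hu Hu1 Hmax) as Hs.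
  unfold X1, Y1, X, Y in Hs. rewrite Hz1 in Hs. exact Hs.
Qed.

Lemma perturbed_sqnorm_no_local_max (g g1 g2 : C -> C) (eps : R) (z1 : C) (d : R) :
  (0 < eps)%R -> (0 < d)%R ->
  (forall z, (Cmod (z - z1) < d)%R -> Cdiff g z (g1 z) /\ Cdiff g1 z (g2 z)) ->
  ~ (forall z, (Cmod (z - z1) < d)%R -> (perturbed_sqnorm g eps z <= perturbed_sqnorm g eps z1)%R).
Proof.
  intros He Hd HD Hm.
  pose proof (perturbed_sqnorm_second_dir g g1 g2 eps z1 d 1 0 ltac:(lra) Hd HD Hm) as H1.
  pose proof (perturbed_sqnorm_second_dir g g1 g2 eps z1 d 0 1 ltac:(lra) Hd HD Hm) as H2.
  destruct (g1 z1), (g2 z1), (g z1). simpl in H1, H2. nra.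
Qed.

Definition Ccontinuous_at (h : C -> R) (w : C) : Prop :=
  forall eps, (0 < eps)%R -> exists del, (0 < del)%R /\
    forall y, (Cmod (y - w) < del)%R -> (Rabs (h y - h w) < eps)%R.

Lemma Cmod_sqr_continuous (h : C -> C) (w : C) :
  (forall eps, (0 < eps)%R -> exists del, (0 < del)%R /\
     forall y, (Cmod (y - w) < del)%R -> (Cmod (h y - h w) < eps)%R) ->
  Ccontinuous_at (fun y => Cmod (h y) ^ 2)%R w.
Proof.
  intros H eps Heps. pose proof (Cmod_ge_0 (h w)) as Hw0.
  set (K := (2 * Cmod (h w) + 1)%R).
  set (e1 := Rmin 1 (eps / K)).
  assert (He1 : (0 < e1)%R) by (apply Rmin_pos; [lra|apply Rdiv_lt_0_compat; unfold K; lra]).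
  assert (He1K : (e1 * K <= eps)%R).
  { apply Rle_trans with (eps / K * K)%R; [|right; field; unfold K; lra].
    apply Rmult_le_compat_r; [unfold K; lra|apply Rmin_r]. }
  destruct (H e1 He1) as [d [Hd Hb]]. exists d. split; auto.
  intros y Hy. specialize (Hb y Hy).
  pose proof (Cmod_triangle_rev (h y) (h w)) as Ht1. pose proof (Cmod_triangle_rev (h w) (h y)) as Ht2.
  replace (h w - h y) with (- (h y - h w)) in Ht2 by ring. rewrite Cmod_opp in Ht2.
  pose proof (Cmod_ge_0 (h y)). assert (Hl1 : (e1 <= 1)%R) by apply Rmin_l.
  replace (Cmod (h y) ^ 2 - Cmod (h w) ^ 2)%R
    with ((Cmod (h y) - Cmod (h w)) * (Cmod (h y) + Cmod (h w)))%R by ring.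
  rewrite Rabs_mult, (Rabs_right (Cmod (h y) + Cmod (h w))) by lra.
  assert (Rabs (Cmod (h y) - Cmod (h w)) < e1)%R by (apply Rabs_def1; lra).
  assert (Cmod (h y) + Cmod (h w) <= K)%R by (unfold K; lra).
  assert (HK : (1 <= K)%R) by (unfold K; lra).
  apply Rle_lt_trans with (Rabs (Cmod (h y) - Cmod (h w)) * K)%R.
  - apply Rmult_le_compat_l; [apply Rabs_pos|lra].
  - nra.
Qed.

Lemma perturbed_sqnorm_continuous (g g1 : C -> C) (eps : R) (w : C) :
  Cdiff g w (g1 w) -> Ccontinuous_at (perturbed_sqnorm g eps) w.
Proof.
  intros Hg e He. pose proof (Rabs_pos eps).
  destruct (Cmod_sqr_continuous g w (Cdiff_continuous g w _ Hg) (e / 2)%R ltac:(lra))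
    as [d1 [Hd1 B1]].
  destruct (Cmod_sqr_continuous (fun x => x) w (fun ep Hep => ex_intro _ ep (conj Hep (fun y H => H)))
              (e / 2 / (Rabs eps + 1))%R ltac:(apply Rdiv_lt_0_compat; lra)) as [d2 [Hd2 B2]].
  exists (Rmin d1 d2). split; [apply Rmin_pos; auto|].
  intros y Hy. rewrite !perturbed_sqnorm_Cmod.
  specialize (B1 y ltac:(eapply Rlt_le_trans; [exact Hy|apply Rmin_l])).
  specialize (B2 y ltac:(eapply Rlt_le_trans; [exact Hy|apply Rmin_r])). cbv beta in B1, B2.
  replace (Cmod (g y) ^ 2 + eps * Cmod y ^ 2 - (Cmod (g w) ^ 2 + eps * Cmod w ^ 2))%R
    with ((Cmod (g y) ^ 2 - Cmod (g w) ^ 2) + eps * (Cmod y ^ 2 - Cmod w ^ 2))%R by ring.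
  eapply Rle_lt_trans; [apply Rabs_triang|]. rewrite Rabs_mult.
  assert (Rabs eps * Rabs (Cmod y ^ 2 - Cmod w ^ 2) <= e / 2)%R.
  { pose proof (Rabs_pos (Cmod y ^ 2 - Cmod w ^ 2)).
    apply Rle_trans with ((Rabs eps + 1) * Rabs (Cmod y ^ 2 - Cmod w ^ 2))%R; [nra|].
    apply Rle_trans with ((Rabs eps + 1) * (e / 2 / (Rabs eps + 1)))%R; [|right; field; lra].
    apply Rmult_le_compat_l; lra. }
  lra.
Qed.

Lemma continuous2_at_polar (v : C -> R) (r t : R) :
  Ccontinuous_at v (polar r t) -> continuous2_at (fun r t => v (polar r t)) r t.
Proof.
  intros Hv eps Heps. destruct (Hv eps Heps) as [d [Hd Hb]].
  pose proof (Rabs_pos r).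
  set (q := (d / (2 + 2 * Rabs r + 1))%R).
  assert (Hq : (0 < q)%R) by (apply Rdiv_lt_0_compat; lra).
  assert (E : ((2 + 2 * Rabs r + 1) * q = d)%R) by (unfold q; field; lra).
  exists q. split; auto. intros r' t' Hr Ht. apply Hb.
  eapply Rle_lt_trans; [apply polar_lipschitz|].
  assert (2 * Rabs r * Rabs (t' - t) <= 2 * Rabs r * q)%R by (apply Rmult_le_compat_l; lra).
  nra.
Qed.

Lemma Cmod_sqr_max_on_disk (g g1 g2 : C -> C) (rho G2 : R) : (0 < rho < 1)%R ->
  Cdiff2_on_U g g1 g2 -> (forall t, (Cmod (g (polar rho t)) ^ 2 <= G2)%R) ->
  forall a, (Cmod a <= rho)%R -> (Cmod (g a) ^ 2 <= G2)%R.
Proof.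
  intros Hrho HD HG a Ha.
  destruct (Rle_or_lt (Cmod (g a) ^ 2) G2) as [H|H]; auto. exfalso.
  set (D := (Cmod (g a) ^ 2 - G2)%R).
  set (eps := (D / (2 * (rho * rho + 1)))%R).
  assert (Heps : (0 < eps)%R) by (unfold eps, D; apply Rdiv_lt_0_compat; nra).
  assert (Heps2 : (eps * (rho * rho) < D)%R).
  { apply (Rmult_lt_reg_r (2 * (rho * rho + 1))); [nra|].
    replace (eps * (rho * rho) * (2 * (rho * rho + 1)))%R with (D * (rho * rho))%R
      by (unfold eps; field; nra).
    unfold D in *. nra. }
  set (V := fun r t => perturbed_sqnorm g eps (polar r t)).
  pose proof PI_RGT_0 as HPI.
  destruct (continuous2_rect_max V 0 rho 0 (2 * PI) ((1 - rho) / 2)) as [r0 [t0 [Hr0 [Ht0 Hmax]]]];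
    try lra.
  { intros x y Hx Hy. apply continuous2_at_polar.
    assert (HU : inU (polar x y)) by (unfold inU; rewrite Cmod_polar; apply Rabs_def1; lra).
    exact (perturbed_sqnorm_continuous g g1 eps _ (proj1 (HD _ HU))). }
  assert (Hdisk : forall z, (Cmod z <= rho)%R -> (perturbed_sqnorm g eps z <= V r0 t0)%R).
  { intros z Hz. destruct (polar_surj z) as [tz [Htz Ez]].
    rewrite Ez. apply Hmax; auto. split; [apply Cmod_ge_0|auto]. }
  destruct (Rle_lt_or_eq_dec r0 rho ltac:(lra)) as [Hlt|Heq].
  - set (z1 := polar r0 t0).
    assert (Hz1 : Cmod z1 = r0) by (unfold z1; rewrite Cmod_polar; apply Rabs_right; lra).
    assert (Hball : forall z, (Cmod (z - z1) < rho - r0)%R -> (Cmod z <= rho)%R).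
    { intros z Hz. replace z with ((z - z1) + z1) by ring.
      eapply Rle_trans; [apply Cmod_triangle|lra]. }
    apply (perturbed_sqnorm_no_local_max g g1 g2 eps z1 (rho - r0) Heps ltac:(lra)).
    + intros z Hz. apply HD. unfold inU. pose proof (Hball z Hz). lra.
    + intros z Hz. apply Hdisk, Hball, Hz.
  - pose proof (Hdisk a Ha) as Hva. subst r0. unfold V in Hva.
    rewrite !perturbed_sqnorm_Cmod, Cmod_polar, Rabs_right in Hva by lra.
    pose proof (pow2_ge_0 (Cmod a)). specialize (HG t0). unfold D in *. nra.
Qed.

Lemma derivable_pt_lim_Cmod_sqr_comp (h : C -> C) (P Q : R -> R) (t P' Q' : R) (l : C) :
  derivable_pt_lim P t P' -> derivable_pt_lim Q t Q' -> Cdiff h (P t, Q t) l ->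
  derivable_pt_lim (fun s => Cmod (h (P s, Q s)) ^ 2)%R t
    (2 * Re (Cconj (h (P t, Q t)) * (l * (P', Q'))))%R.
Proof.
  intros HP HQ Hh.
  pose proof (derivable_pt_lim_Re_comp h P Q t P' Q' l HP HQ Hh) as HRe.
  pose proof (derivable_pt_lim_Im_comp h P Q t P' Q' l HP HQ Hh) as HIm.
  pose proof (derivable_pt_lim_plus _ _ _ _ _ (derivable_pt_lim_mult _ _ _ _ _ HRe HRe)
                (derivable_pt_lim_mult _ _ _ _ _ HIm HIm)) as H.
  unfold plus_fct, mult_fct in H.
  replace (fun s => Cmod (h (P s, Q s)) ^ 2)%R
    with (fun s => Re (h (P s, Q s)) * Re (h (P s, Q s)) + Im (h (P s, Q s)) * Im (h (P s, Q s)))%R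
    by (apply functional_extensionality; intros s; rewrite Cmod2_alt; ring).
  match goal with |- derivable_pt_lim _ _ ?L => match type of H with derivable_pt_lim _ _ ?L' =>
    replace L with L' by (destruct (h (P t, Q t)), l; simpl; ring) end end.
  exact H.
Qed.

Lemma circle_max_exists (g g1 : C -> C) (rho : R) : (0 < rho < 1)%R ->
  (forall z, inU z -> Cdiff g z (g1 z)) ->
  exists z0, Cmod z0 = rho /\ forall z, Cmod z = rho -> (Cmod (g z) ^ 2 <= Cmod (g z0) ^ 2)%R.
Proof.
  intros Hrho Hg. pose proof PI_RGT_0.
  destruct (continuity_ab_maj (fun t => Cmod (g (polar rho t)) ^ 2)%R 0 (2 * PI))
    as [t0 [Hmax _]]; [lra| |].
  { intros t _. apply continuity_pt_intro. intros e He.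
    assert (HU : inU (polar rho t)) by (unfold inU; rewrite Cmod_polar, Rabs_right; lra).
    destruct (continuous2_at_polar _ rho t
                (Cmod_sqr_continuous g _ (Cdiff_continuous g _ _ (Hg _ HU))) e He) as [d [Hd Hb]].
    exists d. split; auto. intros t' Ht'. apply Hb; auto. rewrite Rminus_diag, Rabs_R0. auto. }
  exists (polar rho t0). split; [rewrite Cmod_polar; apply Rabs_right; lra|].
  intros z Hz. destruct (polar_surj z) as [t [Ht ->]]. rewrite Hz. apply Hmax, Ht.
Qed.

(* At a point of [|z| = rho] where [|g|] is maximal, the tangential derivative of [|g|^2]
   vanishes and, by the maximum principle, its radial derivative is nonnegative. *)
Lemma jack_lemma (g g1 g2 : C -> C) (rho : R) : (0 < rho < 1)%R -> Cdiff2_on_U g g1 g2 ->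
  exists z0, (Cmod z0 = rho /\ (forall z, Cmod z = rho -> Cmod (g z) <= Cmod (g z0)) /\
    Im (Cconj (g z0) * g1 z0 * z0)%C = 0 /\ 0 <= Re (Cconj (g z0) * g1 z0 * z0)%C)%R.
Proof.
  intros Hrho HD.
  destruct (circle_max_exists g g1 rho Hrho (fun z Hz => proj1 (HD z Hz))) as [z0 [Hz0 Hmax]].
  assert (Hdisk : forall a, (Cmod a <= rho)%R -> (Cmod (g a) ^ 2 <= Cmod (g z0) ^ 2)%R).
  { apply (Cmod_sqr_max_on_disk g g1 g2 rho _ Hrho HD). intros t. apply Hmax.
    rewrite Cmod_polar. apply Rabs_right. lra. }
  destruct (polar_surj z0) as [t0 [_ E0]]. rewrite Hz0 in E0.
  destruct (HD z0 ltac:(unfold inU; lra)) as [Hg0 _]. rewrite E0 in Hg0.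
  assert (Htan : (2 * Re (Cconj (g (polar rho t0))
                    * (g1 (polar rho t0) * ((- rho * sin t0)%R, (rho * cos t0)%R))) = 0)%R).
  { pose proof (derivable_pt_lim_Cmod_sqr_comp g _ _ t0 _ _ _
                  (derivable_pt_lim_scal_cos rho t0) (derivable_pt_lim_scal_sin rho t0) Hg0) as Hd.
    apply (deriv_maximum _ (t0 - 1) (t0 + 1) t0 (exist _ _ Hd)); try lra.
    intros t _ _. change (Cmod (g (polar rho t)) ^ 2 <= Cmod (g (polar rho t0)) ^ 2)%R.
    rewrite <- E0. apply Hmax. rewrite Cmod_polar. apply Rabs_right. lra. }
  assert (Hrad : (0 <= 2 * Re (Cconj (g (polar rho t0)) * (g1 (polar rho t0) * (cos t0, sin t0))))%R).
  { pose proof (derivable_pt_lim_Cmod_sqr_comp g _ _ rho _ _ _ (derivable_pt_lim_mult_const (cos t0) rho)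
                  (derivable_pt_lim_mult_const (sin t0) rho) Hg0) as Hd.
    apply (deriv_nonneg_at_left_max _ _ _ rho ltac:(lra) Hd). intros h Hh.
    change (Cmod (g (polar (rho - h) t0)) ^ 2 <= Cmod (g (polar rho t0)) ^ 2)%R.
    rewrite <- E0. apply Hdisk. rewrite Cmod_polar, Rabs_right; lra. }
  exists z0. split; [exact Hz0|]. split.
  - intros z Hz. pose proof (Hmax z Hz). pose proof (Cmod_ge_0 (g z)). pose proof (Cmod_ge_0 (g z0)).
    nra.
  - rewrite E0. unfold polar in *.
    destruct (g (rho * cos t0, rho * sin t0)%R), (g1 (rho * cos t0, rho * sin t0)%R).
    simpl in *. split; nra.
Qed.

Lemma Cseries_log_deriv_factor (n p : nat) (A : nat -> C) (F F1 : C -> C) :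
  A p <> 0 -> (forall k, k <> p -> (k < p + n)%nat -> A k = 0) ->
  (forall w, inU w -> Cseries A w (F w)) -> (forall w, inU w -> Cdiff F w (F1 w)) ->
  (forall w, inU w -> w <> 0 -> F w <> 0) ->
  exists g g1 g2, Cdiff2_on_U g g1 g2 /\
    forall w, inU w -> w <> 0 -> w * F1 w / F w - RtoC (INR p) = w ^ n * g w.
Proof.
  intros HAp HA0 HA HFd HF0.
  set (B := fun k => (RtoC (INR k) - RtoC (INR p)) * A k).
  assert (HB : forall w, inU w -> Cseries B w (w * F1 w - RtoC (INR p) * F w)).
  { intros w Hw.
    eapply is_Cseries_ext; [| |exact (is_Cseries_minus _ _ _ _ (Cseries_INR_mult A F F1 HA HFd w Hw)
                                         (is_Cseries_scal (RtoC (INR p)) _ _ (HA w Hw)))].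
    - intros k. unfold B. ring.
    - reflexivity. }
  destruct (Cseries_pow_factor_on_U p A F HA) as [HHc HFH].
  { intros k Hk. apply HA0; lia. }
  destruct (Cseries_pow_factor_on_U (p + n) B _ HB) as [HJc HBJ].
  { intros k Hk. unfold B. destruct (Nat.eq_dec k p) as [->|Hne]; [ring|rewrite HA0; auto; ring]. }
  set (H := Csum (fun k => A (k + p)%nat)). set (J := Csum (fun k => B (k + (p + n))%nat)).
  assert (HH0 : forall w, inU w -> H w <> 0).
  { intros w Hw. destruct (Ceq_dec w 0) as [->|Hw0].
    - unfold H. rewrite (Csum_eq _ _ _ (Cseries_at_0 _)). exact HAp.
    - intros E. apply (HF0 w Hw Hw0). rewrite HFH by exact Hw. fold H. rewrite E. ring. }
  destruct (Cdiff2_on_U_div J _ _ H _ _ (Csum_Cdiff2 _ HJc) (Csum_Cdiff2 _ HHc) HH0) as [g1 [g2 Hg]].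
  exists (fun w => J w / H w), g1, g2. split; [exact Hg|].
  intros w Hw Hw0.
  assert (HFw : F w <> 0) by auto.
  replace (w * F1 w / F w - RtoC (INR p)) with ((w * F1 w - RtoC (INR p) * F w) / F w) by (field; auto).
  rewrite HBJ, HFH by exact Hw. fold H J. rewrite Cpow_add_r. field.
  split; [apply HH0; auto|apply Cpow_nz; auto].
Qed.

Definition Flam_coef (lam : R) (a : nat -> C) (k : nat) : C :=
  (1 - RtoC lam + RtoC lam * RtoC (INR k)) * a k.

Lemma Flam_coef_neq_0 (lam : R) (a : nat -> C) (k : nat) :
  (0 <= lam)%R -> (1 <= k)%nat -> a k <> 0 -> Flam_coef lam a k <> 0.
Proof.
  intros Hlam Hk Ha. unfold Flam_coef. apply Cmult_neq_0; auto.
  rewrite <- RtoC_mult, <- RtoC_minus, <- RtoC_plus. intros E. apply RtoC_inj in E.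
  assert (1 <= INR k)%R by (apply (le_INR 1); auto). nra.
Qed.

Lemma Flam_Cseries (lam : R) (a : nat -> C) (f f1 : C -> C) :
  (forall z, inU z -> Cseries a z (f z)) -> (forall z, inU z -> Cdiff f z (f1 z)) ->
  forall z, inU z -> Cseries (Flam_coef lam a) z (Flam lam f f1 z).
Proof.
  intros Hf Hf1 z Hz.
  eapply is_Cseries_ext;
    [| |exact (is_Cseries_plus _ _ _ _ (is_Cseries_scal (1 - RtoC lam) _ _ (Hf z Hz))
                 (is_Cseries_scal (RtoC lam) _ _ (Cseries_INR_mult a f f1 Hf Hf1 z Hz)))].
  - intros k. unfold Flam_coef. ring.
  - unfold Flam. ring.
Qed.

(* [1 + z F''/F' - z F'/F] is the logarithmic derivative [z phi'/phi] of
   [phi = z F'/F = p + z^n g]. *)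
Lemma log_deriv_identity (n p : nat) (F F1 F2 g g1 : C -> C) (z0 : C) (d : R) :
  (0 < d)%R -> z0 <> 0 -> F z0 <> 0 -> F1 z0 <> 0 -> g z0 <> 0 ->
  Cdiff F z0 (F1 z0) -> Cdiff F1 z0 (F2 z0) -> Cdiff g z0 (g1 z0) ->
  (forall y, (Cmod (y - z0) < d)%R -> y * F1 y / F y - RtoC (INR p) = y ^ n * g y) ->
  Im (Cconj (g z0) * g1 z0 * z0) = 0%R ->
  - (z0 * F1 z0 / F z0) + 1 + z0 * F2 z0 / F1 z0
  = RtoC (INR n + Re (Cconj (g z0) * g1 z0 * z0) / Cmod (g z0) ^ 2)%R
    * (z0 ^ n * g z0 / (RtoC (INR p) + z0 ^ n * g z0)).
Proof.
  intros Hd Hz0 HF HF1 Hg DF DF1 Dg Hrel Him.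
  set (w0 := z0 ^ n * g z0). set (c := Cconj (g z0) * g1 z0 * z0).
  assert (Hphi0 : z0 * F1 z0 / F z0 = RtoC (INR p) + w0).
  { unfold w0. rewrite <- (Hrel z0) by (replace (z0 - z0) with (RtoC 0) by ring; rewrite Cmod_0; lra).
    ring. }
  assert (Hpw : RtoC (INR p) + w0 <> 0).
  { rewrite <- Hphi0. apply Cdiv_neq_0; [apply Cmult_neq_0|]; auto. }
  assert (Hderiv : ((1 * F1 z0 + z0 * F2 z0) * F z0 - z0 * F1 z0 * F1 z0) / (F z0 * F z0)
                   = 0 + (RtoC (INR n) * z0 ^ pred n * g z0 + z0 ^ n * g1 z0)).
  { apply (Cdiff_unique (fun y => y * F1 y / F y) z0).
    - apply (Cdiff_div (fun y => y * F1 y) F z0 (1 * F1 z0 + z0 * F2 z0) (F1 z0)); auto.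
      apply (Cdiff_mult (fun y => y) F1); auto. apply Cdiff_id.
    - apply (Cdiff_ext_loc (fun y => RtoC (INR p) + y ^ n * g y)).
      + exists d. split; auto. intros y Hy. rewrite <- (Hrel y Hy). ring.
      + apply Cdiff_plus; [apply Cdiff_const|]. apply Cdiff_mult; auto. apply Cdiff_pow. }
  assert (Hc : c = RtoC (Re c)) by (apply injective_projections; [reflexivity|exact Him]).
  assert (Hgg : RtoC (Cmod (g z0) ^ 2) = g z0 * Cconj (g z0)) by (rewrite Cmod2_conj; reflexivity).
  assert (Hg0 : (Cmod (g z0) ^ 2 <> 0)%R) 
    by (apply Rgt_not_eq, pow_lt, Cmod_gt_0, Hg).
  assert (Hcg : Cconj (g z0) <> 0).
  { intros E. apply Hg. rewrite <- (Cconj_conj (g z0)), E. apply injective_projections; simpl; ring. }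
  transitivity (z0 * (((1 * F1 z0 + z0 * F2 z0) * F z0 - z0 * F1 z0 * F1 z0) / (F z0 * F z0))
                / (z0 * F1 z0 / F z0)).
  { field. repeat split; auto. }
  rewrite Hderiv, Hphi0, RtoC_plus, RtoC_div by exact Hg0. rewrite <- Hc, Hgg.
  replace (z0 * (0 + (RtoC (INR n) * z0 ^ pred n * g z0 + z0 ^ n * g1 z0)))
    with (z0 * (RtoC (INR n) * z0 ^ pred n) * g z0 + z0 ^ n * g1 z0 * z0) by ring.
  rewrite Cmult_INR_pow_pred. unfold c, w0. field. repeat split; auto.
Qed.

Lemma Re_mult_ratio_lower_bound (n p M k : R) (w : C) :
  (0 < n <= k)%R -> (0 < p <= M)%R -> (M <= Cmod w)%R -> RtoC p + w <> 0 ->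
  (n * M / (M + p) <= k * Re (w / (RtoC p + w)))%R.
Proof.
  intros [Hn Hk] [Hp HpM] HM Hpw. destruct w as [u v].
  assert (HD : (0 < (p + u) * (p + u) + v * v)%R).
  { destruct (Req_dec v 0) as [->|Hv]; [destruct (Req_dec (p + u) 0) as [E|E]|].
    - exfalso. apply Hpw. apply injective_projections; simpl; lra.
    - pose proof (Rsqr_pos_lt _ E). unfold Rsqr in *. lra.
    - pose proof (Rsqr_pos_lt _ Hv). pose proof (Rle_0_sqr (p + u)). unfold Rsqr in *. lra. }
  replace (Re ((u, v) / (RtoC p + (u, v)))) with ((p * u + (u * u + v * v)) / ((p + u) * (p + u) + v * v))%R.
  2:{ unfold Cdiv, Cinv. simpl. field. rewrite ?Rplus_0_r, ?Rmult_1_r. lra. }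
  unfold Cmod in HM. simpl in HM. rewrite !Rmult_1_r in HM.
  set (r := sqrt (u * u + v * v)) in *.
  assert (Hr2 : (r * r = u * u + v * v)%R) by (apply sqrt_sqrt; nra).
  assert (Hr0 : (0 <= r)%R) by apply sqrt_pos.
  assert (Hur : (u <= r)%R) by nra.
  set (D := ((p + u) * (p + u) + v * v)%R) in *.
  set (q := ((p * u + (u * u + v * v)) / D)%R).
  assert (Hq : (M / (M + p) <= q)%R).
  { apply (Rmult_le_reg_r ((M + p) * D)). apply Rmult_lt_0_compat; lra.
    replace (M / (M + p) * ((M + p) * D))%R with (M * D)%R by (field; lra).
    replace (q * ((M + p) * D))%R with ((p * u + (u * u + v * v)) * (M + p))%R by (unfold q; field; lra).
    (* the difference is [p ((r - M)(r + p) + (r - u)(M - p))] *)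
    assert (0 <= (r - M) * (r + p))%R by (apply Rmult_le_pos; lra).
    assert (0 <= (r - u) * (M - p))%R by (apply Rmult_le_pos; lra).
    assert (0 <= p * ((r - M) * (r + p) + (r - u) * (M - p)))%R by (apply Rmult_le_pos; lra).
    unfold D. nra. }
  assert (0 <= M / (M + p))%R by (apply Rdiv_le_0_compat; lra).
  unfold Rdiv at 1. rewrite Rmult_assoc. fold (M / (M + p))%R. nra.
Qed.

Lemma jack_log_deriv_bound (n p : nat) (M : R) (F F1 F2 g g1 g2 : C -> C) :
  (1 <= n)%nat -> (1 <= p)%nat -> (INR p <= M)%R ->
  Cdiff2_on_U F F1 F2 -> Cdiff2_on_U g g1 g2 ->
  (forall w, inU w -> w <> 0 -> F w <> 0 /\ F1 w <> 0) ->
  (forall w, inU w -> w <> 0 -> w * F1 w / F w - RtoC (INR p) = w ^ n * g w) ->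
  forall z, inU z -> z <> 0 -> (M <= Cmod (z ^ n * g z))%R ->
  exists z0, inU z0 /\ z0 <> 0 /\
    (INR n * M / (M + INR p) <= Re (- (z0 * F1 z0 / F z0) + 1 + z0 * F2 z0 / F1 z0))%R.
Proof.
  intros Hn Hp HM HF Hg HF0 Hrel z Hz Hz0 HMz.
  assert (Hp1 : (1 <= INR p)%R) by (apply (le_INR 1); auto).
  assert (Hn1 : (1 <= INR n)%R) by (apply (le_INR 1); auto).
  set (rho := Cmod z).
  assert (Hrho : (0 < rho < 1)%R) by (split; [apply Cmod_gt_0|]; auto).
  destruct (jack_lemma g g1 g2 rho Hrho Hg) as [z0 [Hz0r [Hmax [Him Hre0]]]].
  assert (HU0 : inU z0) by (unfold inU; lra).
  assert (Hz00 : z0 <> 0) by (intros E; rewrite E, Cmod_0 in Hz0r; lra).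
  exists z0. split; [exact HU0|]. split; [exact Hz00|].
  assert (Hw0M : (M <= Cmod (z0 ^ n * g z0))%R).
  { rewrite !Cmod_mult, !Cmod_pow in *. rewrite Hz0r. fold rho in HMz.
    pose proof (pow_le rho n ltac:(lra)). pose proof (Hmax z eq_refl). nra. }
  assert (Hg0 : g z0 <> 0) by (intros E; rewrite E, Cmult_0_r, Cmod_0 in Hw0M; lra).
  destruct (HF0 z0 HU0 Hz00) as [HFz0 HF1z0]. destruct (HF z0 HU0) as [DF DF1].
  assert (Hpw : RtoC (INR p) + z0 ^ n * g z0 <> 0).
  { rewrite <- (Hrel z0 HU0 Hz00).
    replace (RtoC (INR p) + (z0 * F1 z0 / F z0 - RtoC (INR p))) with (z0 * F1 z0 / F z0) by ring.
    apply Cdiv_neq_0; [apply Cmult_neq_0|]; auto. }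
  rewrite (log_deriv_identity n p F F1 F2 g g1 z0 (Rmin rho (1 - rho))); auto.
  - rewrite re_scal_l.
    assert (0 <= Re (Cconj (g z0) * g1 z0 * z0) / Cmod (g z0) ^ 2)%R
      by (apply Rdiv_le_0_compat; [|apply pow_lt, Cmod_gt_0]; auto).
    apply Re_mult_ratio_lower_bound; auto; lra.
  - apply Rmin_pos; lra.
  - apply Hg; auto.
  - intros y Hy.
    assert (Hy1 := Rlt_le_trans _ _ _ Hy (Rmin_l _ _)). assert (Hy2 := Rlt_le_trans _ _ _ Hy (Rmin_r _ _)).
    apply Hrel.
    + apply (inU_ball z0 HU0). rewrite Hz0r. exact Hy2.
    + intros ->. replace (0 - z0) with (- z0) in Hy1 by ring. rewrite Cmod_opp in Hy1. lra.
Qed.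

Theorem corollary3p11 (n p : nat) (lam M : R) (a : nat -> C)
    (f f1 F1 F2 : C -> C) :
  (1 <= n)%nat -> (1 <= p)%nat -> (0 <= lam <= 1)%R ->
  (* f(z) = z^p + sum_{k >= p+n} a_k z^k on U *)
  a p = 1 ->
  (forall k : nat, k <> p -> (k < p + n)%nat -> a k = 0) ->
  (forall z, inU z -> Cseries a z (f z)) ->
  (* f1 = f', F1 = F_lambda', F2 = F_lambda'' on U *)
  (forall z, inU z -> Cderiv f z (f1 z)) ->
  (forall z, inU z -> Cderiv (Flam lam f f1) z (F1 z)) ->
  (forall z, inU z -> Cderiv F1 z (F2 z)) ->
  (forall z, inU z -> z <> 0 -> Flam lam f f1 z * F1 z <> 0) ->
  (INR p <= M)%R ->
  (forall z, inU z -> z <> 0 ->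
     Re (- (z * F1 z / Flam lam f f1 z) + 1 + z * F2 z / F1 z)
       < INR n * M / (M + INR p))%R ->
  forall z, inU z -> z <> 0 ->
    (Cmod (z * F1 z / Flam lam f f1 z - RtoC (INR p)) < M)%R.
Proof.
  intros Hn Hp Hlam Hap Ha0 Hf Hf1 HF1 HF2 HFnz HM Hre z Hz Hz0.
  set (F := Flam lam f f1) in *.
  assert (HF0 : forall w, inU w -> w <> 0 -> F w <> 0 /\ F1 w <> 0)
    by (intros w Hw Hw0; split; intros E; apply (HFnz w Hw Hw0); rewrite E; ring).
  assert (HF : Cdiff2_on_U F F1 F2) by (intros w Hw; split; apply Cderiv_Cdiff; auto).
  assert (Hfd : forall w, inU w -> Cdiff f w (f1 w)) by (intros; apply Cderiv_Cdiff; auto).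
  destruct (Cseries_log_deriv_factor n p (Flam_coef lam a) F F1) as [g [g1 [g2 [Hg Hrel]]]].
  - apply Flam_coef_neq_0; [lra|auto|]. rewrite Hap. intros E. apply (f_equal fst) in E. simpl in E. lra.
  - intros k Hk1 Hk2. unfold Flam_coef. rewrite Ha0; auto. ring.
  - apply Flam_Cseries; auto.
  - apply HF.
  - apply HF0.
  - apply Rnot_le_lt. intros Hbad. rewrite (Hrel z Hz Hz0) in Hbad.
    destruct (jack_log_deriv_bound n p M F F1 F2 g g1 g2 Hn Hp HM HF Hg HF0 Hrel z Hz Hz0 Hbad)
      as [z0 [HU0 [Hz00 Hge]]].
    pose proof (Hre z0 HU0 Hz00). lra.
Qed.
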